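(* Let $A$ be a ring and $\mathfrak{C}$ a Frobenius $A$-coring, with coproduct $\Delta$. Put $\mathfrak{C}^0=A$ and $\mathfrak{C}^k=\mathfrak{C}^{\otimes_A k}$ for $k=1,2,\ldots$. Then there exist ring structures on all $\mathfrak{C}^k$ (the one on $\mathfrak{C}^0$ being that of $A$) and a sequence of ring homomorphisms $$\mathfrak{C}^0\xrightarrow{\Theta}\mathfrak{C}^1\xrightarrow{\Delta}\mathfrak{C}^2\xrightarrow{I_{\mathfrak{C}}\otimes_A\Theta\otimes_AI_{\mathfrak{C}}}\mathfrak{C}^3\to\cdots,$$ where $\Theta(a)=ae=ea$ for an element $e\in\mathfrak{C}$ belonging to a Frobenius system $(\pi,e)$ of $\mathfrak{C}$, such that for every $k=1,2,\ldots$ the extension $\mathfrak{C}^{k-1}\to\mathfrak{C}^k$ is a Frobenius extension and $\mathfrak{C}^k$ is a Frobenius $\mathfrak{C}^{k-1}$-coring (with its $\mathfrak{C}^{k-1}$-bimodule structure induced by the ring map $\mathfrak{C}^{k-1}\to\mathfrak{C}^k$).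
   Context: An $A$-coring $\mathfrak{C}$ is an $(A,A)$-bimodule with coassociative, counital $(A,A)$-bimodule maps $\Delta:\mathfrak{C}\to\mathfrak{C}\otimes_A\mathfrak{C}$ and $\varepsilon:\mathfrak{C}\to A$; write $\Delta(c)=c_{(1)}\otimes_Ac_{(2)}$. Right $\mathfrak{C}$-comodules are right $A$-modules $M$ with right $A$-linear coassociative counital maps $M\to M\otimes_A\mathfrak{C}$, forming a category $\mathbf{M}^{\mathfrak{C}}$ with forgetful functor $F$ to right $A$-modules. A functor is Frobenius if some functor is both its left and right adjoint; $\mathfrak{C}$ is a Frobenius coring if $F$ is Frobenius. A Frobenius system for $\mathfrak{C}$ is a pair $(\pi,e)$ with $e\in\{c\mid ac=ca\ \forall a\in A\}$ and $\pi:\mathfrak{C}\otimes_A\mathfrak{C}\to\mathfrak{C}$ an $(A,A)$-bimodule map with $c_{(1)}\otimes_A\pi(c_{(2)}\otimes_Ac')=\Delta(\pi(c\otimes_Ac'))=\pi(c\otimes_Ac'_{(1)})\otimes_Ac'_{(2)}$ and $\pi(c\otimes_Ae)=\pi(e\otimes_Ac)=c$ for all $c,c'\in\mathfrak{C}$. A ring extension $R\to S$ is Frobenius if $S$ is a finitely generated projective right $R$-module and $S\cong\mathrm{Hom}_R(S,R)$ as $(R,S)$-bimodules; equivalently there are an $(R,R)$-bimodule map $E:S\to R$ and $\beta=\sum_is_i\otimes_R\bar s^i\in S\otimes_RS$ with $s\beta=\beta s$ and $\sum_iE(ss_i)\bar s^i=\sum_is_iE(\bar s^is)=s$ for all $s\in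 S$. *)

From HB Require Import structures.
From mathcomp Require Import all_boot all_algebra.
From mathcomp Require Import boolp.
Set Implicit Arguments. Unset Strict Implicit. Unset Printing Implicit Defensive.
Import GRing.Theory.
Local Open Scope ring_scope.

Section Tensor.
Context (R : Type) (M N : zmodType) (ra : M -> R -> M) (la : R -> N -> N).

Definition balanced (G : zmodType) (f : M -> N -> G) : Prop :=
  [/\ forall m n n', f m (n + n') = f m n + f m n',
      forall m m' n, f (m + m') n = f m n + f m' n
    & forall m r n, f (ra m r) n = f m (la r n)].

Definition teq (l1 l2 : seq (M * N)) : Prop :=
  forall (G : zmodType) (f : M -> N -> G), balanced f ->
    \sum_(p <- l1) f p.1 p.2 = \sum_(p <- l2) f p.1 p.2.

Definition tensor : Type := {P : seq (M * N) -> Prop | exists l, P = teq l}.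

Definition tclass (l : seq (M * N)) : tensor := exist _ (teq l) (ex_intro _ l erefl).
Definition trepr (x : tensor) : seq (M * N) :=
  proj1_sig (constructive_indefinite_description (proj2_sig x)).

Lemma teq_refl l : teq l l. Proof. by []. Qed.
Lemma teq_sym l1 l2 : teq l1 l2 -> teq l2 l1. Proof. by move=> h G f b; rewrite h. Qed.
Lemma teq_trans l1 l2 l3 : teq l1 l2 -> teq l2 l3 -> teq l1 l3.
Proof. by move=> h1 h2 G f b; rewrite h1 // h2. Qed.

Lemma tclass_eq l1 l2 : teq l1 l2 -> tclass l1 = tclass l2.
Proof.
move=> h; apply: eq_exist_uncurried; exists (funext (fun l => propext (conj
  (fun h' => teq_trans (teq_sym h) h') (fun h' => teq_trans h h')))).
exact: Prop_irrelevance.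
Qed.

Lemma treprK x : tclass (trepr x) = x.
Proof.
case: x => P hP; rewrite /trepr /=.
case: (constructive_indefinite_description _) => l /= e.
apply: eq_exist_uncurried; exists (esym e); exact: Prop_irrelevance.
Qed.

Lemma trepr_teq l : teq (trepr (tclass l)) l.
Proof.
rewrite /trepr /=; case: (constructive_indefinite_description _) => l' /= e.
by rewrite -e.
Qed.

Lemma teq_cat a b a' b' : teq a a' -> teq b b' -> teq (a ++ b) (a' ++ b').
Proof. by move=> h1 h2 G f bf; rewrite !big_cat /= h1 // h2. Qed.

Definition tzero : tensor := tclass [::].
Definition tadd (x y : tensor) : tensor := tclass (trepr x ++ trepr y).
Definition topp (x : tensor) : tensor :=
  tclass [seq (- p.1, p.2) | p <- trepr x].

Lemma tadd_class a b : tadd (tclass a) (tclass b) = tclass (a ++ b).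
Proof. by apply: tclass_eq; apply: teq_cat; apply: trepr_teq. Qed.

Lemma bal_oppl (G : zmodType) (f : M -> N -> G) : balanced f -> forall m n, f (- m) n = - f m n.
Proof.
case=> _ h _ m n.
have e := h 0 0 n; rewrite addr0 in e.
have h0 : f 0 n = 0 by have := subrr (f 0 n); rewrite {1}e addrK.
by apply/eqP; rewrite -subr_eq0 opprK -h addNr h0.
Qed.

Lemma topp_class a : topp (tclass a) = tclass [seq (- p.1, p.2) | p <- a].
Proof.
apply: tclass_eq => G f b; rewrite !big_map /=.
rewrite (eq_bigr (fun p => - f p.1 p.2)); last by move=> p _; rewrite bal_oppl.
rewrite [RHS](eq_bigr (fun p => - f p.1 p.2)); last by move=> p _; rewrite bal_oppl.
by rewrite !sumrN (@trepr_teq a G f b).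
Qed.

Lemma tensor_ind (P : tensor -> Prop) : (forall l, P (tclass l)) -> forall x, P x.
Proof. by move=> h x; rewrite -(treprK x). Qed.

Lemma taddA : associative tadd.
Proof.
elim/tensor_ind=> a; elim/tensor_ind=> b; elim/tensor_ind=> c.
by rewrite !tadd_class catA.
Qed.
Lemma taddC : commutative tadd.
Proof.
elim/tensor_ind=> a; elim/tensor_ind=> b; rewrite !tadd_class.
apply: tclass_eq => G f _; rewrite !big_cat /=. exact: addrC. Qed.
Lemma tadd0 : left_id tzero tadd.
Proof. by elim/tensor_ind=> a; rewrite tadd_class. Qed.
Lemma taddN : left_inverse tzero topp tadd.
Proof.
elim/tensor_ind=> a; rewrite topp_class tadd_class; apply: tclass_eq => G f b.
rewrite big_cat big_map /= big_nil.
rewrite (eq_bigr (fun p => - f p.1 p.2)); last by move=> p _; rewrite bal_oppl.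
by rewrite sumrN addNr.
Qed.

HB.instance Definition _ := gen_eqMixin tensor.
HB.instance Definition _ := gen_choiceMixin tensor.
HB.instance Definition _ := GRing.isZmodule.Build tensor taddA taddC tadd0 taddN.


Definition tmk (m : M) (n : N) : tensor := tclass [:: (m, n)].
Definition tlift (G : zmodType) (f : M -> N -> G) (x : tensor) : G :=
  \sum_(p <- trepr x) f p.1 p.2.

End Tensor.

Arguments tensor {R M N} ra la.
Arguments tmk {R M N ra la} m n.
Arguments tlift {R M N ra la G} f x.

Definition tlact {R S : Type} {M N : zmodType} {ra : M -> R -> M} {la : R -> N -> N}
  (laM : S -> M -> M) (s : S) (x : tensor ra la) : tensor ra la :=
  tlift (fun m n => tmk (laM s m) n) x.
Definition tract {R S : Type} {M N : zmodType} {ra : M -> R -> M} {la : R -> N -> N}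
  (raN : N -> S -> N) (x : tensor ra la) (s : S) : tensor ra la :=
  tlift (fun m n => tmk m (raN n s)) x.

Definition additive (M G : zmodType) (f : M -> G) : Prop :=
  forall x y, f (x + y) = f x + f y.

Definition is_ring (R : zmodType) (mul : R -> R -> R) (one : R) : Prop :=
  [/\ associative mul, left_id one mul, right_id one mul,
      left_distributive mul +%R & right_distributive mul +%R].

Definition is_rhom (R S : zmodType) (mulR : R -> R -> R) (oneR : R)
  (mulS : S -> S -> S) (oneS : S) (phi : R -> S) : Prop :=
  [/\ additive phi, forall a b, phi (mulR a b) = mulS (phi a) (phi b) & phi oneR = oneS].

Definition is_rmod (R : zmodType) (mul : R -> R -> R) (one : R)
  (M : zmodType) (ra : M -> R -> M) : Prop :=
  [/\ forall m r s, ra m (r + s) = ra m r + ra m s,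
      forall m m' r, ra (m + m') r = ra m r + ra m' r,
      forall m r s, ra (ra m r) s = ra m (mul r s)
    & forall m, ra m one = m].

Definition is_lmod (R : zmodType) (mul : R -> R -> R) (one : R)
  (M : zmodType) (la : R -> M -> M) : Prop :=
  [/\ forall r s m, la (r + s) m = la r m + la s m,
      forall r m m', la r (m + m') = la r m + la r m',
      forall r s m, la r (la s m) = la (mul r s) m
    & forall m, la one m = m].

Definition is_bimod (R : zmodType) (mul : R -> R -> R) (one : R)
  (M : zmodType) (la : R -> M -> M) (ra : M -> R -> M) : Prop :=
  [/\ is_lmod mul one la, is_rmod mul one ra & forall r m s, ra (la r m) s = la r (ra m s)].

Section Coring.
Context (R : zmodType) (mulR : R -> R -> R) (oneR : R)
  (C : zmodType) (la : R -> C -> C) (ra : C -> R -> C)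
  (Delta : C -> tensor ra la) (eps : C -> R).

Definition is_coring : Prop :=
  [/\ is_bimod mulR oneR la ra,
      [/\ additive Delta,
          forall r c, Delta (la r c) = tlact la r (Delta c)
        & forall c r, Delta (ra c r) = tract ra (Delta c) r],
      [/\ additive eps,
          forall r c, eps (la r c) = mulR r (eps c)
        & forall c r, eps (ra c r) = mulR (eps c) r],
      (* coassociativity, (Delta ⊗ I) ∘ Delta = (I ⊗ Delta) ∘ Delta up to the
         canonical associator (C ⊗ C) ⊗ C ≅ C ⊗ (C ⊗ C) *)
      forall c,
        tlift (fun c1 c2 => tlift (fun a b => tmk (ra:=ra) (la:=tlact la) a (tmk b c2)) (Delta c1)) (Delta c)
        = tlift (fun c1 c2 => tmk (ra:=ra) (la:=tlact la) c1 (Delta c2)) (Delta c)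
    & forall c, tlift (fun c1 c2 => la (eps c1) c2) (Delta c) = c /\
                tlift (fun c1 c2 => ra c1 (eps c2)) (Delta c) = c].

Record rmodule := RModule {
  rm_car :> zmodType;
  rm_act : rm_car -> R -> rm_car;
  rm_ax : is_rmod mulR oneR rm_act }.

Record comodule := Comodule {
  cm_car :> zmodType;
  cm_act : cm_car -> R -> cm_car;
  cm_rho : cm_car -> tensor cm_act la;
  cm_rmod : is_rmod mulR oneR cm_act;
  cm_ax : [/\ additive cm_rho,
              forall m r, cm_rho (cm_act m r) = tract ra (cm_rho m) r,
              forall m, tlift (fun m0 c => tlift (fun m' c' =>
                           tmk (ra:=cm_act) (la:=tlact la) m' (tmk c' c)) (cm_rho m0)) (cm_rho m)
                        = tlift (fun m0 c => tmk (ra:=cm_act) (la:=tlact la) m0 (Delta c)) (cm_rho m)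
            & forall m, tlift (fun m0 c => cm_act m0 (eps c)) (cm_rho m) = m] }.

Definition rhom (M N : rmodule) (f : M -> N) : Prop :=
  additive f /\ forall m r, f (rm_act m r) = rm_act (f m) r.

Definition forget (X : comodule) : rmodule := RModule (cm_rmod X).

Definition chom (X Y : comodule) (f : X -> Y) : Prop :=
  rhom (M := forget X) (N := forget Y) f /\
  forall x, @cm_rho Y (f x) = tlift (fun m c => tmk (f m) c) (@cm_rho X x).

(* F -| G, for F the forgetful functor comodules -> right R-modules *)
Definition forget_left_adjoint (G : rmodule -> comodule)
  (Gm : forall N N' : rmodule, (N -> N') -> G N -> G N') : Prop :=
  exists (phi : forall (X : comodule) (N : rmodule), (X -> N) -> X -> G N)
         (psi : forall (X : comodule) (N : rmodule), (X -> G N) -> X -> N),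
  [/\ forall X N f, rhom (M := forget X) f -> chom (phi X N f),
      forall X N g, chom g -> rhom (M := forget X) (psi X N g),
      forall X N f, rhom (M := forget X) f -> psi X N (phi X N f) = f,
      forall X N g, chom g -> phi X N (psi X N g) = g
    & forall (X X' : comodule) (N N' : rmodule) (h : X' -> X) (f : X -> N) (g : N -> N'),
        chom h -> rhom (M := forget X) f -> rhom g ->
        phi X' N' (g \o f \o h) = Gm N N' g \o phi X N f \o h].

(* G -| F *)
Definition forget_right_adjoint (G : rmodule -> comodule)
  (Gm : forall N N' : rmodule, (N -> N') -> G N -> G N') : Prop :=
  exists (phi : forall (N : rmodule) (X : comodule), (G N -> X) -> N -> X)
         (psi : forall (N : rmodule) (X : comodule), (N -> X) -> G N -> X),
  [/\ forall N X f, chom f -> rhom (N := forget X) (phi N X f),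
      forall N X g, rhom (N := forget X) g -> chom (psi N X g),
      forall N X f, chom f -> psi N X (phi N X f) = f,
      forall N X g, rhom (N := forget X) g -> phi N X (psi N X g) = g
    & forall (N N' : rmodule) (X X' : comodule) (h : N' -> N) (f : G N -> X) (g : X -> X'),
        rhom h -> chom f -> chom g ->
        phi N' X' (g \o f \o Gm N' N h) = g \o phi N X f \o h].

(* C is a Frobenius coring: the forgetful functor is Frobenius *)
Definition frobenius_coring : Prop :=
  exists (G : rmodule -> comodule) (Gm : forall N N' : rmodule, (N -> N') -> G N -> G N'),
  [/\ forall N N' g, rhom g -> chom (Gm N N' g),
      forall N : rmodule, Gm N N id = id,
      forall (N N' N'' : rmodule) (g : N -> N') (g' : N' -> N''),
        rhom g -> rhom g' -> Gm N N'' (g' \o g) = Gm N' N'' g' \o Gm N N' g,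
      forget_left_adjoint Gm
    & forget_right_adjoint Gm].

End Coring.

Definition frobenius_extension (R S : zmodType) (mulR : R -> R -> R) (oneR : R)
  (mulS : S -> S -> S) (oneS : S) (phi : R -> S) : Prop :=
  (* S is a finitely generated projective right R-module (s.r := s * phi r):
     a direct summand of some R^n *)
  (exists (n : nat) (p : S -> 'I_n -> R) (q : ('I_n -> R) -> S),
     [/\ forall s s' i, p (s + s') i = p s i + p s' i,
         forall s r i, p (mulS s (phi r)) i = mulR (p s i) r,
         forall v w, q (fun i => v i + w i) = q v + q w,
         forall v r, q (fun i => mulR (v i) r) = mulS (q v) (phi r)
       & forall s, q (p s) = s]) /\
  (* S ≅ Hom_R(S, R) as (R, S)-bimodules, where (r.f.s)(x) = r * f (s * x) *)
  (exists Phi : S -> S -> R,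
     [/\ forall s, additive (Phi s) /\ forall x r, Phi s (mulS x (phi r)) = mulR (Phi s x) r,
         forall s s', Phi (s + s') = (fun x => Phi s x + Phi s' x),
         injective Phi,
         forall g : S -> R, additive g -> (forall x r, g (mulS x (phi r)) = mulR (g x) r) ->
           exists s, Phi s = g
       & (forall r s, Phi (mulS (phi r) s) = (fun x => mulR r (Phi s x))) /\
         (forall s s', Phi (mulS s s') = (fun x => Phi s (mulS s' x)))]).

Definition frobenius_system (R : zmodType) (C : zmodType) (la : R -> C -> C) (ra : C -> R -> C)
  (Delta : C -> tensor ra la) (pi : tensor ra la -> C) (e : C) : Prop :=
  [/\ forall r, la r e = ra e r,
      [/\ additive pi, forall r x, pi (tlact la r x) = la r (pi x)
        & forall x r, pi (tract ra x r) = ra (pi x) r],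
      forall c c', tlift (fun c1 c2 => tmk c1 (pi (tmk c2 c'))) (Delta c) = Delta (pi (tmk c c')),
      forall c c', Delta (pi (tmk c c')) = tlift (fun d1 d2 => tmk (pi (tmk c d1)) d2) (Delta c')
    & forall c, pi (tmk c e) = c /\ pi (tmk e c) = c].

(* Tensor powers: Cpos n = C^{n+1} = (..((C ⊗_A C) ⊗_A C) .. ) ⊗_A C, with
   its right A-action; Cpow 0 = A, Cpow (n+1) = Cpos n. *)
Fixpoint Cpos (A : pzRingType) (C : zmodType) (la : A -> C -> C) (ra : C -> A -> C) (n : nat)
  : {M : zmodType & M -> A -> M} :=
  match n with
  | 0 => existT (fun M : zmodType => M -> A -> M) C ra
  | n'.+1 => existT (fun M : zmodType => M -> A -> M)
               (tensor (projT2 (Cpos la ra n')) la : zmodType) (tract ra)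
  end.

Definition Cpow (A : pzRingType) (C : zmodType) (la : A -> C -> C) (ra : C -> A -> C) (k : nat)
  : zmodType :=
  match k with
  | 0 => (A : zmodType)
  | n.+1 => projT1 (Cpos la ra n)
  end.

(* Everything comes from iterating one construction.  Let [ph : R -> S] be a ring map and
   let [S] be an [R]-coring whose comultiplication [DS] is [S]-bilinear.  Writing
   [DS 1 = \sum_i a_i (x) b_i], every [s] equals [\sum_i a_i eS (b_i s)], so [S] is finitely
   generated projective over [R] and [s |-> eS (s _)] identifies [S] with [Hom_R(S, R)]:
   [ph] is a Frobenius extension.  Moreover [(mS, 1)] is a Frobenius system of [S], and any
   Frobenius system [(pi, e)] makes [- (x)_R S] both a right and a left adjoint of the
   forgetful functor, with [pi] and [e] providing the adjunction data.
   Next, [S (x)_R S] is a ring for [(s (x) s') (t (x) t') = s eS (s' t) (x) t'], [DS] is a ring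
   map into it, and the Sweedler coring [S (x)_R S] over [S] again has bilinear
   comultiplication.  If [S = R (x)_A C] then [S (x)_R S = S (x)_A C], so [C^k -> C^(k+1)]
   yields [C^(k+1) -> C^(k+2)].  The induction starts from [A -> C], [a |-> a e], where [C]
   is a ring with product [c c' = pi (c (x) c')] and unit [e], and the axioms of the
   Frobenius system say that [Delta] is [C]-bilinear. *)

From Pilot Require Import Defs.
From HB Require Import structures.
From mathcomp Require Import all_boot all_algebra.
From mathcomp Require Import boolp.
Set Implicit Arguments. Unset Strict Implicit. Unset Printing Implicit Defensive.
Import GRing.Theory.
Local Open Scope ring_scope.
(* [additive] would otherwise resolve to the structure of additive morphisms from ssralg. *)
Notation additive := Defs.additive.

(** * Balanced maps and tensor products *)

Lemma additive0 (M G : zmodType) (f : M -> G) : additive f -> f 0 = 0.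
Proof.
move=> fD; have := fD 0 0; rewrite addr0 => e.
by have := subrr (f 0); rewrite {1}e addrK.
Qed.

Lemma additive_sum (M G : zmodType) (f : M -> G) (I : Type) (l : seq I) (F : I -> M) :
  additive f -> f (\sum_(i <- l) F i) = \sum_(i <- l) f (F i).
Proof.
move=> fD; elim: l => [|i l IH]; first by rewrite !big_nil (additive0 fD).
by rewrite !big_cons fD IH.
Qed.

Section TensorTheory.
Context (R : Type) (M N : zmodType) (ra : M -> R -> M) (la : R -> N -> N).
Local Notation T := (tensor ra la).
Local Notation tmk := (@tmk R M N ra la).

Lemma mk_balanced (G : zmodType) (f : M -> N -> G) :
  (forall m, additive (f m)) -> (forall n, additive (f^~ n)) ->
  (forall m r n, f (ra m r) n = f m (la r n)) -> balanced ra la f.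
Proof. by move=> fDr fDl fmid; split=> // m m' n; apply: fDl. Qed.

Lemma tclass_cons p l : tclass ra la (p :: l) = tmk p.1 p.2 + tclass ra la l.
Proof. by case: p => a b; rewrite /GRing.add /= /tmk tadd_class. Qed.

Lemma tlift_tclass (G : zmodType) (f : M -> N -> G) : balanced ra la f ->
  forall l, tlift f (tclass ra la l) = \sum_(p <- l) f p.1 p.2.
Proof. by move=> fb l; rewrite /tlift (@trepr_teq _ _ _ ra la l G f fb). Qed.

Lemma tlift_tmk (G : zmodType) (f : M -> N -> G) : balanced ra la f ->
  forall m n, tlift f (tmk m n) = f m n.
Proof. by move=> fb m n; rewrite /Defs.tmk tlift_tclass // big_seq1. Qed.

Lemma tlift_additive (G : zmodType) (f : M -> N -> G) : balanced ra la f ->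
  additive (tlift (ra:=ra) (la:=la) f).
Proof.
move=> fb x y; rewrite -(treprK x) -(treprK y) /GRing.add /= tadd_class.
by rewrite !tlift_tclass // big_cat.
Qed.

Lemma tlift_comp (G H : zmodType) (f : M -> N -> G) (h : G -> H) : additive h ->
  forall x : T, h (tlift f x) = tlift (fun m n => h (f m n)) x.
Proof. by move=> hD x; rewrite /tlift additive_sum. Qed.

Lemma eq_tlift (G : zmodType) (f g : M -> N -> G) : (forall m n, f m n = g m n) ->
  forall x : T, tlift f x = tlift g x.
Proof. by move=> fg x; apply: eq_bigr => p _; rewrite fg. Qed.

Lemma tlift_addf (G : zmodType) (f g : M -> N -> G) (x : T) :
  tlift (fun m n => f m n + g m n) x = tlift f x + tlift g x.
Proof. by rewrite /tlift big_split. Qed.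

Lemma tensor_sum_ind (P : T -> Prop) : P 0 -> (forall m n x, P x -> P (tmk m n + x)) ->
  forall x, P x.
Proof.
move=> P0 PS; elim/tensor_ind => l; elim: l => [|p l IH]; first exact: P0.
by rewrite tclass_cons; apply: PS.
Qed.

Lemma eq_additive_tensor (G : zmodType) (F F' : T -> G) : additive F -> additive F' ->
  (forall m n, F (tmk m n) = F' (tmk m n)) -> forall x, F x = F' x.
Proof.
move=> FD F'D FF'; elim/tensor_sum_ind; first by rewrite (additive0 FD) (additive0 F'D).
by move=> m n x IH; rewrite FD F'D FF' IH.
Qed.

Lemma tmkDr m n n' : tmk m (n + n') = tmk m n + tmk m n'.
Proof.
rewrite /GRing.add /= /Defs.tmk tadd_class; apply: tclass_eq => G f [fD _ _].
by rewrite big_seq1 /= big_cons big_seq1 fD.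
Qed.

Lemma tmkDl m m' n : tmk (m + m') n = tmk m n + tmk m' n.
Proof.
rewrite /GRing.add /= /Defs.tmk tadd_class; apply: tclass_eq => G f [_ fD _].
by rewrite big_seq1 /= big_cons big_seq1 fD.
Qed.

Lemma tmk_mid m r n : tmk (ra m r) n = tmk m (la r n).
Proof. by apply: tclass_eq => G f [_ _ fmid]; rewrite !big_seq1 /= fmid. Qed.

Lemma tmk_balanced : balanced ra la tmk.
Proof. by split; [exact: tmkDr | exact: tmkDl | exact: tmk_mid]. Qed.

Lemma tlift_tmk_id (x : T) : tlift tmk x = x.
Proof.
move: x; apply: eq_additive_tensor => [|//|m n]; first exact: tlift_additive tmk_balanced.
by rewrite tlift_tmk //; exact: tmk_balanced.
Qed.

End TensorTheory.

Arguments tlift_additive {R M N ra la G f}.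
Arguments tlift_comp {R M N ra la G H f h}.

Lemma tlift_tlift (R : Type) (M N : zmodType) (ra : M -> R -> M) (la : R -> N -> N)
  (R' : Type) (M' N' : zmodType) (ra' : M' -> R' -> M') (la' : R' -> N' -> N')
  (G : zmodType) (F : M' -> N' -> G) (g : M -> N -> tensor ra' la') :
  balanced ra' la' F -> forall x : tensor ra la,
  tlift F (tlift g x) = tlift (fun m n => tlift F (g m n)) x.
Proof. by move=> Fb x; rewrite tlift_comp //; exact: tlift_additive Fb. Qed.

Arguments tlift_tlift {R M N ra la R' M' N' ra' la' G F g}.

Lemma exchange_tlift (R1 R2 : Type) (M1 N1 M2 N2 G : zmodType)
  (ra1 : M1 -> R1 -> M1) (la1 : R1 -> N1 -> N1) (ra2 : M2 -> R2 -> M2) (la2 : R2 -> N2 -> N2)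
  (F : M1 -> N1 -> M2 -> N2 -> G) (x : tensor ra1 la1) (y : tensor ra2 la2) :
  tlift (fun a b => tlift (fun c d => F a b c d) y) x =
  tlift (fun c d => tlift (fun a b => F a b c d) x) y.
Proof. exact: exchange_big. Qed.

Section TensorActions.
Context (R S : Type) (M N : zmodType) (ra : M -> R -> M) (la : R -> N -> N).
Local Notation T := (tensor ra la).
Local Notation tmk := (@tmk R M N ra la).

Section LeftAction.
Variables (laM : S -> M -> M) (s : S).
Hypotheses (laMD : additive (laM s)) (laMA : forall m r, laM s (ra m r) = ra (laM s m) r).

Lemma tlact_balanced : balanced ra la (fun m n => tmk (laM s m) n).
Proof.
apply: mk_balanced => [m n n'|n m m'|m r n]; first exact: tmkDr.
  by rewrite laMD tmkDl.
by rewrite laMA tmk_mid.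
Qed.

Lemma tlact_tmk m n : tlact laM s (tmk m n) = tmk (laM s m) n.
Proof. by rewrite /tlact tlift_tmk //; exact: tlact_balanced. Qed.

Lemma tlact_additive : additive (tlact (ra:=ra) (la:=la) laM s).
Proof. exact: tlift_additive tlact_balanced. Qed.

End LeftAction.

Section RightAction.
Variables (raN : N -> S -> N) (s : S).
Hypotheses (raND : additive (raN^~ s)) (raNA : forall r n, la r (raN n s) = raN (la r n) s).

Lemma tract_balanced : balanced ra la (fun m n => tmk m (raN n s)).
Proof.
apply: mk_balanced => [m n n'|n m m'|m r n]; first by rewrite raND tmkDr.
  exact: tmkDl.
by rewrite tmk_mid raNA.
Qed.

Lemma tract_tmk m n : tract raN (tmk m n) s = tmk m (raN n s).
Proof. by rewrite /tract tlift_tmk //; exact: tract_balanced. Qed.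

Lemma tract_additive : additive (fun x : T => tract raN x s).
Proof. exact: tlift_additive tract_balanced. Qed.

End RightAction.

Lemma tlift_tlact (G : zmodType) (F : M -> N -> G) (laM : S -> M -> M) s (x : T) :
  balanced ra la F -> tlift F (tlact laM s x) = tlift (fun m n => F (laM s m) n) x.
Proof. by move=> Fb; rewrite /tlact tlift_tlift //; apply: eq_tlift => m n; rewrite tlift_tmk. Qed.

Lemma tlift_tract (G : zmodType) (F : M -> N -> G) (raN : N -> S -> N) s (x : T) :
  balanced ra la F -> tlift F (tract raN x s) = tlift (fun m n => F m (raN n s)) x.
Proof. by move=> Fb; rewrite /tract tlift_tlift //; apply: eq_tlift => m n; rewrite tlift_tmk. Qed.

End TensorActions.

Arguments tlact_tmk {R S M N ra la laM s} laMD laMA m n.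
Arguments tract_tmk {R S M N ra la raN s} raND raNA m n.

Lemma tlact_additive_scalar (R : Type) (S M N : zmodType) (ra : M -> R -> M)
  (la : R -> N -> N) (laM : S -> M -> M) (x : tensor ra la) :
  (forall m, additive (laM^~ m)) -> additive (fun s => tlact laM s x).
Proof.
move=> laMD s s'; rewrite /tlact -tlift_addf; apply: eq_tlift => m n.
by rewrite laMD tmkDl.
Qed.

Lemma tract_additive_scalar (R : Type) (S M N : zmodType) (ra : M -> R -> M)
  (la : R -> N -> N) (raN : N -> S -> N) (x : tensor ra la) :
  (forall n, additive (raN n)) -> additive (fun s => tract raN x s).
Proof.
move=> raND s s'; rewrite /tract -tlift_addf; apply: eq_tlift => m n.
by rewrite raND tmkDr.
Qed.

Section RingTheory.
Context (R : zmodType) (mul : R -> R -> R) (one : R) (Rring : is_ring mul one).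

Lemma ring_mulA : associative mul. Proof. by case: Rring. Qed.
Lemma ring_mul1r : left_id one mul. Proof. by case: Rring. Qed.
Lemma ring_mulr1 : right_id one mul. Proof. by case: Rring. Qed.
Lemma ring_mulDl x y z : mul (x + y) z = mul x z + mul y z.
Proof. by case: Rring => _ _ _ mulDl _; apply: mulDl. Qed.
Lemma ring_mulDr x y z : mul x (y + z) = mul x y + mul x z.
Proof. by case: Rring => _ _ _ _ mulDr; apply: mulDr. Qed.
Lemma ring_mull_additive z : additive (mul^~ z). Proof. by move=> x y; rewrite ring_mulDl. Qed.
Lemma ring_mulr_additive x : additive (mul x). Proof. by move=> y z; rewrite ring_mulDr. Qed.

End RingTheory.

Lemma pzRing_is_ring (A : pzRingType) : is_ring ( *%R : A -> A -> A) 1.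
Proof. by split; [exact: mulrA | exact: mul1r | exact: mulr1 | exact: mulrDl | exact: mulrDr]. Qed.

Section RingMorphismTheory.
Context (R S : zmodType) (mR : R -> R -> R) (oR : R) (mS : S -> S -> S) (oS : S) (ph : R -> S).
Hypothesis phM : is_rhom mR oR mS oS ph.

Lemma rhom_additive : additive ph. Proof. by case: phM. Qed.
Lemma rhomM x y : ph (mR x y) = mS (ph x) (ph y). Proof. by case: phM => _ phM' _; apply: phM'. Qed.
Lemma rhom1 : ph oR = oS. Proof. by case: phM. Qed.

Lemma rhom_bimod : is_ring mS oS ->
  is_bimod mR oR (fun r s => mS (ph r) s) (fun s r => mS s (ph r)).
Proof.
move=> Sring; have mSA := ring_mulA Sring.
split; first split.
- by move=> r r' s; rewrite rhom_additive (ring_mulDl Sring).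
- by move=> r s s'; rewrite (ring_mulDr Sring).
- by move=> r r' s; rewrite rhomM mSA.
- by move=> s; rewrite rhom1 (ring_mul1r Sring).
- split.
  + by move=> s r r'; rewrite rhom_additive (ring_mulDr Sring).
  + by move=> s s' r; rewrite (ring_mulDl Sring).
  + by move=> s r r'; rewrite rhomM mSA.
  + by move=> s; rewrite rhom1 (ring_mulr1 Sring).
- by move=> r s r'; rewrite mSA.
Qed.

End RingMorphismTheory.

Lemma rhom_comp (R S U : zmodType) (mR : R -> R -> R) oR (mS : S -> S -> S) oS
  (mU : U -> U -> U) oU f g :
  is_rhom mR oR mS oS f -> is_rhom mS oS mU oU g -> is_rhom mR oR mU oU (fun x => g (f x)).
Proof.
move=> [fD fM f1] [gD gM g1]; split; first by move=> x y; rewrite fD gD.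
  by move=> x y; rewrite fM gM.
by rewrite f1 g1.
Qed.

Section ModuleTheory.
Context (R : zmodType) (mR : R -> R -> R) (oR : R) (M : zmodType).

Section RightModule.
Variable (act : M -> R -> M).
Hypothesis Mmod : is_rmod mR oR act.
Lemma rmod_actDr m r s : act m (r + s) = act m r + act m s.
Proof. by case: Mmod => actDr _ _ _; apply: actDr. Qed.
Lemma rmod_actDl m m' r : act (m + m') r = act m r + act m' r.
Proof. by case: Mmod => _ actDl _ _; apply: actDl. Qed.
Lemma rmod_actA m r s : act (act m r) s = act m (mR r s).
Proof. by case: Mmod => _ _ actA _; apply: actA. Qed.
Lemma rmod_act1 m : act m oR = m. Proof. by case: Mmod. Qed.
Lemma rmod_act_additive r : additive (act^~ r). Proof. by move=> x y; rewrite rmod_actDl. Qed.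
End RightModule.

Section LeftModule.
Variable (act : R -> M -> M).
Hypothesis Mmod : is_lmod mR oR act.
Lemma lmod_actDl r s m : act (r + s) m = act r m + act s m.
Proof. by case: Mmod => actDl _ _ _; apply: actDl. Qed.
Lemma lmod_actA r s m : act r (act s m) = act (mR r s) m.
Proof. by case: Mmod => _ _ actA _; apply: actA. Qed.
Lemma lmod_act1 m : act oR m = m. Proof. by case: Mmod. Qed.
Lemma lmod_act_additive r : additive (act r).
Proof. by case: Mmod => _ actDr _ _ x y; apply: actDr. Qed.
End LeftModule.

End ModuleTheory.

Section CoringTheory.
Context (R : zmodType) (mR : R -> R -> R) (oR : R) (C : zmodType)
  (la : R -> C -> C) (ra : C -> R -> C) (Delta : C -> tensor ra la) (eps : C -> R).
Hypothesis Ccor : is_coring mR oR Delta eps.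

Lemma coring_bimod : is_bimod mR oR la ra. Proof. by case: Ccor. Qed.
Lemma coring_lmod : is_lmod mR oR la. Proof. by case: coring_bimod. Qed.
Lemma coring_rmod : is_rmod mR oR ra. Proof. by case: coring_bimod. Qed.
Lemma coring_actC r c s : la r (ra c s) = ra (la r c) s.
Proof. by case: coring_bimod => _ _ actC; rewrite actC. Qed.
Lemma coring_Delta_additive : additive Delta. Proof. by case: Ccor => _ []. Qed.
Lemma coring_Deltal r c : Delta (la r c) = tlact la r (Delta c).
Proof. by case: Ccor => _ [_ Dl _] _ _ _; apply: Dl. Qed.
Lemma coring_Deltar c r : Delta (ra c r) = tract ra (Delta c) r.
Proof. by case: Ccor => _ [_ _ Dr] _ _ _; apply: Dr. Qed.
Lemma coring_eps_additive : additive eps. Proof. by case: Ccor => _ _ []. Qed.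
Lemma coring_epsl r c : eps (la r c) = mR r (eps c).
Proof. by case: Ccor => _ _ [_ el _] _ _; apply: el. Qed.
Lemma coring_epsr c r : eps (ra c r) = mR (eps c) r.
Proof. by case: Ccor => _ _ [_ _ er] _ _; apply: er. Qed.
Lemma coring_coassoc c :
  tlift (fun c1 c2 =>
    tlift (fun a b => tmk (ra:=ra) (la:=tlact la) a (tmk b c2)) (Delta c1)) (Delta c)
  = tlift (fun c1 c2 => tmk (ra:=ra) (la:=tlact la) c1 (Delta c2)) (Delta c).
Proof. by case: Ccor => _ _ _ coass _; apply: coass. Qed.
Lemma coring_counitl c : tlift (fun c1 c2 => la (eps c1) c2) (Delta c) = c.
Proof. by case: Ccor => _ _ _ _ cu; case: (cu c). Qed.
Lemma coring_counitr c : tlift (fun c1 c2 => ra c1 (eps c2)) (Delta c) = c.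
Proof. by case: Ccor => _ _ _ _ cu; case: (cu c). Qed.

Lemma coring_la_additive r : additive (la r). Proof. exact: lmod_act_additive coring_lmod r. Qed.
Lemma coring_ra_additive r : additive (ra^~ r). Proof. exact: rmod_act_additive coring_rmod r. Qed.

Lemma coring_counitl_balanced : balanced ra la (fun c1 c2 => la (eps c1) c2).
Proof.
apply: mk_balanced => [a x y|b x y|a r b]; first exact: coring_la_additive.
  by rewrite coring_eps_additive (lmod_actDl coring_lmod).
by rewrite coring_epsr (lmod_actA coring_lmod).
Qed.

Lemma coring_counitr_balanced : balanced ra la (fun c1 c2 => ra c1 (eps c2)).
Proof.
apply: mk_balanced => [a x y|b x y|a r b].
- by rewrite coring_eps_additive (rmod_actDr coring_rmod).
- by rewrite (rmod_actDl coring_rmod).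
by rewrite coring_epsl (rmod_actA coring_rmod).
Qed.

End CoringTheory.

Section FrobeniusSystemTheory.
Context (R : zmodType) (C : zmodType) (la : R -> C -> C) (ra : C -> R -> C)
  (Delta : C -> tensor ra la) (pi : tensor ra la -> C) (e : C).
Hypothesis Cfs : frobenius_system Delta pi e.

Lemma frobsys_e_central r : la r e = ra e r. Proof. by case: Cfs. Qed.
Lemma frobsys_pi_additive : additive pi. Proof. by case: Cfs => _ []. Qed.
Lemma frobsys_pil r x : pi (tlact la r x) = la r (pi x).
Proof. by case: Cfs => _ [_ pil _] _ _ _; apply: pil. Qed.
Lemma frobsys_pir x r : pi (tract ra x r) = ra (pi x) r.
Proof. by case: Cfs => _ [_ _ pir] _ _ _; apply: pir. Qed.
Lemma frobsys_Delta_pil c c' :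
  Delta (pi (tmk c c')) = tlift (fun c1 c2 => tmk c1 (pi (tmk c2 c'))) (Delta c).
Proof. by case: Cfs => _ _ Dpi _ _; rewrite Dpi. Qed.
Lemma frobsys_Delta_pir c c' :
  Delta (pi (tmk c c')) = tlift (fun d1 d2 => tmk (pi (tmk c d1)) d2) (Delta c').
Proof. by case: Cfs => _ _ _ Dpi _; apply: Dpi. Qed.
Lemma frobsys_pi_c_e c : pi (tmk c e) = c. Proof. by case: Cfs => _ _ _ _ pie; case: (pie c). Qed.
Lemma frobsys_pi_e_c c : pi (tmk e c) = c. Proof. by case: Cfs => _ _ _ _ pie; case: (pie c). Qed.

End FrobeniusSystemTheory.

(** * Frobenius systems make corings Frobenius *)

Section ComoduleTheory.
Context (R : zmodType) (mR : R -> R -> R) (oR : R) (D : zmodType)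
  (la : R -> D -> D) (ra : D -> R -> D) (Delta : D -> tensor ra la) (eps : D -> R).
Local Notation rmod := (rmodule mR oR).
Local Notation como := (comodule mR oR Delta eps).
Local Notation act N := (@rm_act _ mR oR N).
Local Notation cact X := (@cm_act _ mR oR _ la ra Delta eps X).
Local Notation coact X := (@cm_rho _ mR oR _ la ra Delta eps X).

Section Comodule.
Variable X : como.
Lemma comod_rmod : is_rmod mR oR (cact X). Proof. exact: cm_rmod. Qed.
Lemma comod_coact_additive : additive (coact X). Proof. by case: (cm_ax X). Qed.
Lemma comod_coactr m r : coact X (cact X m r) = tract ra (coact X m) r.
Proof. by case: (cm_ax X) => _ coactr _ _; apply: coactr. Qed.
Lemma comod_coassoc m : tlift (fun m0 c => tlift (fun m' c' =>
      tmk (ra:=cact X) (la:=tlact la) m' (tmk c' c)) (coact X m0)) (coact X m)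
    = tlift (fun m0 c => tmk (ra:=cact X) (la:=tlact la) m0 (Delta c)) (coact X m).
Proof. by case: (cm_ax X) => _ _ coass _; apply: coass. Qed.
Lemma comod_counit m : tlift (fun m0 c => cact X m0 (eps c)) (coact X m) = m.
Proof. by case: (cm_ax X). Qed.
End Comodule.

Lemma modhom_additive (N N' : rmod) (g : N -> N') : rhom g -> additive g.
Proof. by case. Qed.
Lemma modhom_act (N N' : rmod) (g : N -> N') : rhom g ->
  forall m r, g (act N m r) = act N' (g m) r.
Proof. by case. Qed.

Lemma comodhom_additive (X Y : como) (g : X -> Y) : chom g -> additive g.
Proof. by case=> [[]]. Qed.
Lemma comodhom_act (X Y : como) (g : X -> Y) : chom g ->
  forall m r, g (cact X m r) = cact Y (g m) r.
Proof. by case=> [[]]. Qed.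
Lemma comodhom_coact (X Y : como) (g : X -> Y) : chom g ->
  forall x, coact Y (g x) = tlift (fun m c => tmk (ra:=cact Y) (la:=la) (g m) c) (coact X x).
Proof. by case. Qed.

End ComoduleTheory.

Lemma tmk_map_balanced (R : Type) (M N P : zmodType) (raM : M -> R -> M) (raN : N -> R -> N)
  (la : R -> P -> P) (g : M -> N) :
  additive g -> (forall m r, g (raM m r) = raN (g m) r) ->
  balanced raM la (fun m p => tmk (ra:=raN) (la:=la) (g m) p).
Proof.
move=> gD gA; apply: mk_balanced => [m p p'|p m m'|m r p]; first exact: tmkDr.
  by rewrite gD tmkDl.
by rewrite gA tmk_mid.
Qed.

Section FrobeniusSystemCoring.
Context (R : zmodType) (mR : R -> R -> R) (oR : R) (D : zmodType)
  (la : R -> D -> D) (ra : D -> R -> D) (Delta : D -> tensor ra la) (eps : D -> R)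
  (pi : tensor ra la -> D) (e : D).
Hypotheses (Dcor : is_coring mR oR Delta eps) (Dfs : frobenius_system Delta pi e).

Local Notation rmod := (rmodule mR oR).
Local Notation como := (comodule mR oR Delta eps).
Local Notation act N := (@rm_act _ mR oR N).
Local Notation cact X := (@cm_act _ mR oR _ la ra Delta eps X).
Local Notation coact X := (@cm_rho _ mR oR _ la ra Delta eps X).
Local Notation tmkD := (@tmk R D D ra la).

Let Drmod := coring_rmod Dcor.
Let actC := coring_actC Dcor.
Let epsD := coring_eps_additive Dcor.
Let epsl := coring_epsl Dcor.
Let epsr := coring_epsr Dcor.
Let piD := frobsys_pi_additive Dfs.
Let raD := coring_ra_additive Dcor.
Let laD := coring_la_additive Dcor.

Section Cofree.
Variable N : rmod.
Local Notation tmkN := (@tmk R N D (act N) la).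

Definition cofree_car : zmodType := (tensor (act N) la : zmodType).
Definition cofree_act : cofree_car -> R -> cofree_car := tract (ra:=act N) (la:=la) ra.
Local Notation tmkG := (@tmk R cofree_car D cofree_act la).
Local Notation tmk3 := (@tmk R cofree_car (tensor ra la) cofree_act (tlact (ra:=ra) (la:=la) la)).

Lemma cofree_act_tmk n d r : cofree_act (tmkN n d) r = tmkN n (ra d r).
Proof. exact: (tract_tmk (raD r) (fun r' n => actC r' n r)). Qed.

Lemma cofree_act_additive r : additive (cofree_act^~ r).
Proof. exact: (tract_additive (raD r) (fun r' n => actC r' n r)). Qed.

Lemma cofree_rmod : is_rmod mR oR cofree_act.
Proof.
split.
- move=> x r s; rewrite /cofree_act /tract -tlift_addf; apply: eq_tlift => m n.
  by rewrite (rmod_actDr Drmod) tmkDr.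
- by move=> x x' r; rewrite cofree_act_additive.
- move=> x r s; move: x; apply: eq_additive_tensor.
  + by move=> x y /=; rewrite !cofree_act_additive.
  + exact: cofree_act_additive.
  by move=> n d; rewrite !cofree_act_tmk (rmod_actA Drmod).
- move=> x; rewrite /cofree_act /tract -[RHS]tlift_tmk_id; apply: eq_tlift => m n.
  by rewrite (rmod_act1 Drmod).
Qed.

Let coact_gen (n : N) := fun d1 d2 : D => tmkG (tmkN n d1) d2.

Let coact_gen_balanced n : balanced ra la (coact_gen n).
Proof.
apply: mk_balanced => [d1 x y|d2 x y|d1 r d2]; first exact: tmkDr.
  by rewrite /coact_gen tmkDr tmkDl.
by rewrite /coact_gen -cofree_act_tmk tmk_mid.
Qed.

Definition cofree_coact (x : cofree_car) : tensor cofree_act la :=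
  tlift (fun n d => tlift (coact_gen n) (Delta d)) x.

Let cofree_coact_balanced : balanced (act N) la (fun n d => tlift (coact_gen n) (Delta d)).
Proof.
apply: mk_balanced => [n x y|d x y|n r d].
- by rewrite (coring_Delta_additive Dcor) (tlift_additive (coact_gen_balanced n)).
- rewrite -tlift_addf; apply: eq_tlift => a b.
  by rewrite /coact_gen !tmkDl.
rewrite (coring_Deltal Dcor) tlift_tlact //; apply: eq_tlift => a b.
by rewrite /coact_gen tmk_mid.
Qed.

Lemma cofree_coact_tmk n d : cofree_coact (tmkN n d) = tlift (coact_gen n) (Delta d).
Proof. by rewrite /cofree_coact tlift_tmk. Qed.

Lemma cofree_coact_additive : additive cofree_coact.
Proof. exact: (tlift_additive cofree_coact_balanced). Qed.

Let tract_cofree_additive r :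
  additive (fun x : tensor cofree_act la => tract (ra:=cofree_act) (la:=la) ra x r).
Proof. exact: (tract_additive (raD r) (fun r' n => actC r' n r)). Qed.

Lemma cofree_coactr x r :
  cofree_coact (cofree_act x r) = tract (ra:=cofree_act) (la:=la) ra (cofree_coact x) r.
Proof.
move: x; apply: eq_additive_tensor.
- by move=> x y /=; rewrite cofree_act_additive cofree_coact_additive.
- by move=> x y /=; rewrite cofree_coact_additive tract_cofree_additive.
move=> n d; rewrite cofree_act_tmk !cofree_coact_tmk (coring_Deltar Dcor) tlift_tract //.
rewrite (tlift_comp (tract_cofree_additive r)); apply: eq_tlift => a b.
by rewrite /coact_gen (tract_tmk (raD r) (fun r' n => actC r' n r)).
Qed.

Let coass_lhs_gen (c : D) := fun (m' : cofree_car) (c' : D) => tmk3 m' (tmkD c' c).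

Let coass_lhs_gen_balanced c : balanced cofree_act la (coass_lhs_gen c).
Proof.
apply: mk_balanced => [m' x y|c' x y|m' r c'].
- by rewrite /coass_lhs_gen tmkDl tmkDr.
- by rewrite /coass_lhs_gen tmkDl.
by rewrite /coass_lhs_gen tmk_mid (tlact_tmk (laD r) (fun m s => actC r m s)).
Qed.

Let coass_lhs (m0 : cofree_car) (c : D) := tlift (coass_lhs_gen c) (cofree_coact m0).

Let coass_lhs_balanced : balanced cofree_act la coass_lhs.
Proof.
apply: mk_balanced => [m0 x y|c x y|m0 r c].
- rewrite /coass_lhs -tlift_addf; apply: eq_tlift => a b.
  by rewrite /coass_lhs_gen !tmkDr.
- by rewrite /coass_lhs cofree_coact_additive (tlift_additive (coass_lhs_gen_balanced c)).
rewrite /coass_lhs cofree_coactr tlift_tract //; apply: eq_tlift => a b.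
by rewrite /coass_lhs_gen tmk_mid.
Qed.

Let coass_rhs (m0 : cofree_car) (c : D) := tmk3 m0 (Delta c).

Let coass_rhs_balanced : balanced cofree_act la coass_rhs.
Proof.
apply: mk_balanced => [m0 x y|c x y|m0 r c].
- by rewrite /coass_rhs (coring_Delta_additive Dcor) tmkDr.
- by rewrite /coass_rhs tmkDl.
by rewrite /coass_rhs tmk_mid (coring_Deltal Dcor).
Qed.

Let assoc_tmk (n : N) := fun (a : D) (y : tensor ra la) => tmk3 (tmkN n a) y.

Let assoc_tmk_balanced n : balanced ra (tlact (ra:=ra) (la:=la) la) (assoc_tmk n).
Proof.
apply: mk_balanced => [a x y|y x x'|a r y]; first exact: tmkDr.
  by rewrite /assoc_tmk tmkDr tmkDl.
by rewrite /assoc_tmk -cofree_act_tmk tmk_mid.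
Qed.

Lemma cofree_coassoc m : tlift coass_lhs (cofree_coact m) = tlift coass_rhs (cofree_coact m).
Proof.
move: m; apply: eq_additive_tensor.
- by move=> x y; rewrite cofree_coact_additive (tlift_additive coass_lhs_balanced).
- by move=> x y; rewrite cofree_coact_additive (tlift_additive coass_rhs_balanced).
move=> n d; rewrite cofree_coact_tmk (tlift_tlift coass_lhs_balanced).
rewrite (tlift_tlift coass_rhs_balanced).
have assocD := tlift_additive (assoc_tmk_balanced n).
transitivity (tlift (assoc_tmk n) (tlift (fun c1 c2 =>
  tlift (fun a b => tmk (ra:=ra) (la:=tlact la) a (tmkD b c2)) (Delta c1)) (Delta d))).
  rewrite (tlift_comp assocD); apply: eq_tlift => a b.
  rewrite /coact_gen (tlift_tmk coass_lhs_balanced) /coass_lhs cofree_coact_tmk.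
  rewrite (tlift_tlift (coass_lhs_gen_balanced b)) (tlift_comp assocD).
  by apply: eq_tlift => a' b'; rewrite !tlift_tmk.
rewrite (coring_coassoc Dcor) (tlift_comp assocD); apply: eq_tlift => a b.
by rewrite /coact_gen (tlift_tmk coass_rhs_balanced) (tlift_tmk (assoc_tmk_balanced n)).
Qed.

Let counit_gen (m0 : cofree_car) (c : D) := cofree_act m0 (eps c).

Let counit_gen_balanced : balanced cofree_act la counit_gen.
Proof.
apply: mk_balanced => [m0 x y|c x y|m0 r c].
- by rewrite /counit_gen epsD (rmod_actDr cofree_rmod).
- exact: cofree_act_additive.
by rewrite /counit_gen (rmod_actA cofree_rmod) epsl.
Qed.

Lemma cofree_counit m : tlift counit_gen (cofree_coact m) = m.
Proof.
move: m; apply: eq_additive_tensor => //.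
  by move=> x y; rewrite cofree_coact_additive (tlift_additive counit_gen_balanced).
move=> n d; rewrite cofree_coact_tmk (tlift_tlift counit_gen_balanced).
rewrite (eq_tlift (g := fun a b => tmkN n (ra a (eps b)))); last first.
  by move=> a b; rewrite /coact_gen (tlift_tmk counit_gen_balanced) /counit_gen cofree_act_tmk.
by rewrite -(tlift_comp (h := tmkN n)) ?(coring_counitr Dcor) // => x y; rewrite tmkDr.
Qed.

Lemma cofree_comodule_axioms : [/\ additive cofree_coact,
  forall m r, cofree_coact (cofree_act m r) = tract (ra:=cofree_act) (la:=la) ra (cofree_coact m) r,
  forall m, tlift (fun m0 c => tlift (fun m' c' =>
      tmk (ra:=cofree_act) (la:=tlact la) m' (tmk c' c)) (cofree_coact m0)) (cofree_coact m)
    = tlift (fun m0 c => tmk (ra:=cofree_act) (la:=tlact la) m0 (Delta c)) (cofree_coact m)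
  & forall m, tlift (fun m0 c => cofree_act m0 (eps c)) (cofree_coact m) = m].
Proof.
split; [exact: cofree_coact_additive | exact: cofree_coactr | exact: cofree_coassoc
  | exact: cofree_counit].
Qed.

End Cofree.

Definition cofree (N : rmod) : como :=
  @Comodule _ _ _ _ _ _ Delta eps (cofree_car N) (@cofree_act N) (@cofree_coact N)
    (@cofree_rmod N) (@cofree_comodule_axioms N).

Definition cofree_map (N N' : rmod) (g : N -> N') : cofree N -> cofree N' :=
  tlift (fun n d => tmk (ra:=act N') (la:=la) (g n) d).

Section CofreeMap.
Variables (N N' : rmod) (g : N -> N').
Hypothesis g_rhom : rhom g.

Let cofree_map_balanced : balanced (act N) la (fun n d => tmk (ra:=act N') (la:=la) (g n) d).
Proof. by case: g_rhom => gD gA; apply: tmk_map_balanced. Qed.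

Lemma cofree_map_tmk n d : cofree_map g (tmk (ra:=act N) (la:=la) n d) = tmk (g n) d.
Proof. by rewrite /cofree_map tlift_tmk. Qed.

Lemma cofree_map_additive : additive (cofree_map g).
Proof. exact: tlift_additive cofree_map_balanced. Qed.

Lemma cofree_map_act m r : cofree_map g (cofree_act m r) = cofree_act (cofree_map g m) r.
Proof.
move: m; apply: eq_additive_tensor.
+ by move=> x y /=; rewrite cofree_act_additive cofree_map_additive.
+ by move=> x y /=; rewrite cofree_map_additive cofree_act_additive.
by move=> n d /=; rewrite cofree_act_tmk !cofree_map_tmk cofree_act_tmk.
Qed.

Lemma cofree_map_chom : chom (cofree_map g).
Proof.
split; first by split; [exact: cofree_map_additive | exact: cofree_map_act].
have mapb : balanced (@cofree_act N) la
    (fun m c => tmk (ra:=@cofree_act N') (la:=la) (cofree_map g m) c).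
  exact: tmk_map_balanced cofree_map_additive cofree_map_act.
apply: eq_additive_tensor.
- by move=> x y /=; rewrite cofree_map_additive cofree_coact_additive.
- by move=> x y /=; rewrite cofree_coact_additive (tlift_additive mapb).
move=> n d /=; rewrite cofree_map_tmk !cofree_coact_tmk (tlift_tlift mapb).
by apply: eq_tlift => a c; rewrite tlift_tmk // cofree_map_tmk.
Qed.

End CofreeMap.

Lemma cofree_map_id (N : rmod) : cofree_map (N:=N) id = id.
Proof. by apply: funext => x; rewrite /cofree_map tlift_tmk_id. Qed.

Lemma cofree_map_comp (N N' N'' : rmod) (g : N -> N') (g' : N' -> N'') : rhom g -> rhom g' ->
  cofree_map (g' \o g) = cofree_map g' \o cofree_map g.
Proof.
move=> g_rhom g'_rhom; have gg'_rhom : rhom (N := N'') (g' \o g).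
  split=> [x y|m r] /=.
    by rewrite (modhom_additive g_rhom) (modhom_additive g'_rhom).
  by rewrite (modhom_act g_rhom) (modhom_act g'_rhom).
apply: funext; apply: eq_additive_tensor => [|x y /=|n d /=]; first exact: cofree_map_additive.
  by rewrite (cofree_map_additive g_rhom) (cofree_map_additive g'_rhom).
by rewrite !cofree_map_tmk.
Qed.

Definition to_cofree (X : como) (N : rmod) (f : X -> N) : X -> cofree N :=
  fun x => tlift (fun m c => tmk (ra:=act N) (la:=la) (f m) c) (coact X x).
Definition of_cofree (X : como) (N : rmod) (g : X -> cofree N) : X -> N :=
  fun x => tlift (fun n d => act N n (eps d)) (g x).

Let counit_act_balanced (N : rmod) : balanced (act N) la (fun n d => act N n (eps d)).
Proof.
apply: mk_balanced => [n x y|d x y|n r d].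
- by rewrite epsD (rmod_actDr (rm_ax N)).
- by rewrite (rmod_actDl (rm_ax N)).
by rewrite epsl (rmod_actA (rm_ax N)).
Qed.

Lemma counit_act_cofree_act (N : rmod) y r :
  tlift (fun n d => act N n (eps d)) (cofree_act y r) =
  act N (tlift (fun n d => act N n (eps d)) y) r.
Proof.
rewrite /cofree_act tlift_tract //.
rewrite (tlift_comp (h := act N ^~ r)); last exact: rmod_act_additive (rm_ax N) r.
by apply: eq_tlift => n d; rewrite epsr (rmod_actA (rm_ax N)).
Qed.

Section ToCofree.
Variables (X : como) (N : rmod) (f : X -> N).
Hypothesis f_rhom : rhom (M := forget X) f.

Let to_cofree_balanced : balanced (cact X) la (fun m c => tmk (ra:=act N) (la:=la) (f m) c).
Proof. by case: f_rhom => fD fA; apply: tmk_map_balanced. Qed.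

Lemma to_cofree_additive : additive (to_cofree (N:=N) f).
Proof.
by move=> x y; rewrite /to_cofree comod_coact_additive (tlift_additive to_cofree_balanced).
Qed.

Lemma to_cofree_act x r : to_cofree f (cact X x r) = cofree_act (to_cofree f x) r.
Proof.
rewrite /to_cofree comod_coactr tlift_tract //.
by rewrite (tlift_comp (cofree_act_additive r)); apply: eq_tlift => m c; rewrite cofree_act_tmk.
Qed.

Let coact_gen (n : N) :=
  fun d1 d2 : D => tmk (ra:=@cofree_act N) (la:=la) (tmk (ra:=act N) (la:=la) n d1) d2.

Let coact_gen_balanced n : balanced ra la (coact_gen n).
Proof.
apply: mk_balanced => [d1 y z|d2 y z|d1 r d2]; first exact: tmkDr.
  by rewrite /coact_gen tmkDr tmkDl.
by rewrite /coact_gen -cofree_act_tmk tmk_mid.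
Qed.

Let coact_map (m : X) (y : tensor ra la) := tlift (coact_gen (f m)) y.

Let coact_map_balanced : balanced (cact X) (tlact (ra:=ra) (la:=la) la) coact_map.
Proof.
case: f_rhom => fD fA.
apply: mk_balanced => [m y z|y m m'|m r y]; first exact: (tlift_additive (coact_gen_balanced _)).
  rewrite /coact_map -tlift_addf; apply: eq_tlift => a c.
  by rewrite /coact_gen fD !tmkDl.
rewrite /coact_map tlift_tlact //; apply: eq_tlift => a c.
by rewrite /coact_gen fA tmk_mid.
Qed.

Lemma to_cofree_coact x : cofree_coact (to_cofree f x) =
  tlift (fun m c => tmk (ra:=@cofree_act N) (la:=la) (to_cofree f m) c) (coact X x).
Proof.
have coact_mapD := tlift_additive coact_map_balanced.
transitivity (tlift coact_map
    (tlift (fun m0 c => tmk (ra:=cact X) (la:=tlact la) m0 (Delta c)) (coact X x))).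
  rewrite /to_cofree (tlift_comp (@cofree_coact_additive N)) (tlift_comp coact_mapD).
  by apply: eq_tlift => m c; rewrite cofree_coact_tmk (tlift_tmk coact_map_balanced).
rewrite -comod_coassoc (tlift_comp coact_mapD); apply: eq_tlift => m0 c.
rewrite (tlift_comp coact_mapD) /to_cofree.
rewrite (tlift_comp (h := fun z => tmk (ra:=@cofree_act N) (la:=la) z c)); last first.
  by move=> y z; rewrite tmkDl.
by apply: eq_tlift => m' c'; rewrite (tlift_tmk coact_map_balanced) /coact_map tlift_tmk.
Qed.

Lemma to_cofree_chom : chom (to_cofree (N:=N) f).
Proof.
by split; [split; [exact: to_cofree_additive | exact: to_cofree_act] | exact: to_cofree_coact].
Qed.

Lemma to_cofreeK : of_cofree (to_cofree (N:=N) f) = f.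
Proof.
case: f_rhom => fD fA; apply: funext => x; rewrite /of_cofree /to_cofree tlift_tlift //.
rewrite (eq_tlift (g := fun m c => f (cact X m (eps c)))); last first.
  by move=> m c; rewrite tlift_tmk // fA.
by rewrite -(tlift_comp fD) comod_counit.
Qed.

End ToCofree.

Section OfCofree.
Variables (X : como) (N : rmod) (g : X -> cofree N).
Hypothesis g_chom : chom g.

Lemma of_cofree_rhom : rhom (M := forget X) (of_cofree g).
Proof.
split=> [x y|m r]; first by rewrite /of_cofree (comodhom_additive g_chom) tlift_additive.
by rewrite /of_cofree /= (comodhom_act g_chom m r) counit_act_cofree_act.
Qed.

Lemma of_cofreeK : to_cofree (of_cofree g) = g.
Proof.
apply: funext => x; rewrite /to_cofree /of_cofree.
pose p0 := fun y : cofree N => tlift (fun n d => act N n (eps d)) y.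
have p0b : balanced (@cofree_act N) la (fun y c => tmk (ra:=act N) (la:=la) (p0 y) c).
  apply: tmk_map_balanced; last exact: counit_act_cofree_act.
  exact: tlift_additive.
have p0D := tlift_additive p0b.
rewrite (eq_tlift (g := fun m c => tlift (fun y c => tmk (ra:=act N) (la:=la) (p0 y) c)
    (tmk (ra:=@cofree_act N) (la:=la) (g m) c))); last by move=> m c; rewrite tlift_tmk.
rewrite -(tlift_comp p0D) -(comodhom_coact g_chom).
rewrite /cofree_coact (tlift_comp p0D) -[RHS]tlift_tmk_id; apply: eq_tlift => n d.
rewrite (tlift_comp p0D).
rewrite (eq_tlift (g := fun d1 d2 => tmk (ra:=act N) (la:=la) n (la (eps d1) d2))); last first.
  by move=> d1 d2; rewrite tlift_tmk // /p0 tlift_tmk // tmk_mid.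
rewrite -(tlift_comp (h := tmk (ra:=act N) (la:=la) n)); last by move=> a b; rewrite tmkDr.
by rewrite (coring_counitl Dcor).
Qed.

End OfCofree.

Lemma to_cofree_natural (X X' : como) (N N' : rmod) (h : X' -> X) (f : X -> N) (g : N -> N') :
  chom h -> rhom (M := forget X) f -> rhom g ->
  to_cofree (g \o f \o h) = cofree_map g \o to_cofree f \o h.
Proof.
move=> h_chom [fD fA] g_rhom; apply: funext => x /=.
rewrite /to_cofree (comodhom_coact h_chom) tlift_tlift; last exact: tmk_map_balanced.
rewrite (tlift_comp (cofree_map_additive g_rhom)); apply: eq_tlift => m c.
by rewrite tlift_tmk ?(cofree_map_tmk g_rhom) //; apply: tmk_map_balanced.
Qed.

Lemma forget_cofree_adjoint : forget_left_adjoint (G := cofree) cofree_map.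
Proof.
exists to_cofree, of_cofree; split.
- exact: to_cofree_chom.
- exact: of_cofree_rhom.
- exact: to_cofreeK.
- exact: of_cofreeK.
- exact: to_cofree_natural.
Qed.

(* The counit of [cofree -| forget], [x (x) d |-> x_0 eps (pi (x_1 (x) d))], is where the
   Frobenius system enters. *)
Definition pi_contract (X : como) (d : D) :=
  fun (x0 : X) (x1 : D) => cact X x0 (eps (pi (tmk x1 d))).
Definition contract (X : como) (d : D) (y : X) : X := tlift (pi_contract d) (coact X y).

Lemma pi_contract_balanced (X : como) d : balanced (cact X) la (pi_contract d).
Proof.
apply: mk_balanced => [x0 a b|x1 a b|x0 r x1].
- by rewrite /pi_contract tmkDl piD epsD (rmod_actDr (comod_rmod X)).
- by rewrite /pi_contract (rmod_actDl (comod_rmod X)).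
rewrite /pi_contract (rmod_actA (comod_rmod X)); congr (cact X x0 _).
by rewrite -(tlact_tmk (laD r) (fun m s => actC r m s)) (frobsys_pil Dfs) epsl.
Qed.

Let pi_contractD (d : D) := fun c c' : D => ra c (eps (pi (tmk c' d))).

Let pi_contractD_balanced d : balanced ra la (pi_contractD d).
Proof.
apply: mk_balanced => [c a b|c' a b|c r c'].
- by rewrite /pi_contractD tmkDl piD epsD (rmod_actDr Drmod).
- by rewrite /pi_contractD (rmod_actDl Drmod).
rewrite /pi_contractD (rmod_actA Drmod); congr (ra c _).
by rewrite -(tlact_tmk (laD r) (fun m s => actC r m s)) (frobsys_pil Dfs) epsl.
Qed.

Lemma tlift_pi_contractD d c : tlift (pi_contractD d) (Delta c) = pi (tmk c d).
Proof.
rewrite -[RHS](coring_counitr Dcor) (frobsys_Delta_pil Dfs).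
rewrite (tlift_tlift (coring_counitr_balanced Dcor)).
by apply: eq_tlift => a b; rewrite (tlift_tmk (coring_counitr_balanced Dcor)).
Qed.

Lemma contract_coact (X : como) d (y : X) :
  coact X (contract d y) =
  tlift (fun m0 c => tmk (ra:=cact X) (la:=la) m0 (pi (tmk c d))) (coact X y).
Proof.
pose chi := fun (m : X) (z : tensor ra la) =>
  tmk (ra:=cact X) (la:=la) m (tlift (pi_contractD d) z).
have chib : balanced (cact X) (tlact (ra:=ra) (la:=la) la) chi.
  apply: mk_balanced => [m a b|z a b|m r z].
  - by rewrite /chi (tlift_additive (pi_contractD_balanced d)) tmkDr.
  - by rewrite /chi tmkDl.
  rewrite /chi tmk_mid tlift_tlact //; congr tmk.
  by rewrite (tlift_comp (laD r)); apply: eq_tlift => a b; rewrite /pi_contractD actC.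
have chiD := tlift_additive chib.
transitivity (tlift chi (tlift (fun m0 c => tlift (fun m' c' =>
      tmk (ra:=cact X) (la:=tlact la) m' (tmk c' c)) (coact X m0)) (coact X y))).
  rewrite /contract (tlift_comp (@comod_coact_additive _ _ _ _ _ _ _ _ X)) (tlift_comp chiD).
  apply: eq_tlift => x0 x1.
  rewrite /pi_contract comod_coactr (tlift_comp chiD) /tract; apply: eq_tlift => m' c'.
  by rewrite (tlift_tmk chib) /chi tlift_tmk.
rewrite comod_coassoc (tlift_comp chiD); apply: eq_tlift => m0 c.
by rewrite (tlift_tmk chib) /chi tlift_pi_contractD.
Qed.

Lemma contract_Delta (X : como) d (y : X) :
  tlift (fun d1 d2 => tmk (ra:=cact X) (la:=la) (contract d1 y) d2) (Delta d)
  = tlift (fun m0 c => tmk (ra:=cact X) (la:=la) m0 (pi (tmk c d))) (coact X y).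
Proof.
rewrite (eq_tlift (g := fun d1 d2 => tlift (fun x0 x1 =>
    tmk (ra:=cact X) (la:=la) (pi_contract d1 x0 x1) d2) (coact X y))); last first.
  move=> d1 d2; rewrite /contract (tlift_comp (h := fun z => tmk (ra:=cact X) (la:=la) z d2)) //.
  by move=> a b; rewrite tmkDl.
rewrite exchange_tlift; apply: eq_tlift => x0 x1.
rewrite (eq_tlift (g := fun d1 d2 =>
    tmk (ra:=cact X) (la:=la) x0 (la (eps (pi (tmk x1 d1))) d2))); last first.
  by move=> d1 d2; rewrite /pi_contract tmk_mid.
rewrite -(tlift_comp (h := tmk (ra:=cact X) (la:=la) x0)); last by move=> a b; rewrite tmkDr.
congr tmk.
rewrite -[RHS](coring_counitl Dcor) (frobsys_Delta_pir Dfs).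
rewrite (tlift_tlift (coring_counitl_balanced Dcor)).
by apply: eq_tlift => a b; rewrite (tlift_tmk (coring_counitl_balanced Dcor)).
Qed.

Definition cofree_restrict (N : rmod) (X : como) (f : cofree N -> X) : N -> X :=
  fun n => f (tmk (ra:=act N) (la:=la) n e).
Definition cofree_extend (N : rmod) (X : como) (g : N -> X) : cofree N -> X :=
  tlift (fun n d => contract d (g n)).

Lemma cofree_restrict_rhom (N : rmod) (X : como) (f : cofree N -> X) :
  chom f -> rhom (N := forget X) (cofree_restrict f).
Proof.
move=> f_chom; split=> [x y|n r].
  by rewrite /cofree_restrict tmkDl (comodhom_additive f_chom).
rewrite /cofree_restrict /= tmk_mid (frobsys_e_central Dfs) -cofree_act_tmk.
exact: (comodhom_act f_chom).
Qed.

Section CofreeExtend.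
Variables (N : rmod) (X : como) (g : N -> X).
Hypothesis g_rhom : rhom (N := forget X) g.

Let extend_balanced : balanced (act N) la (fun n d => contract d (g n)).
Proof.
case: g_rhom => gD gA; apply: mk_balanced => [n a b|d a b|n r d].
- rewrite /contract -tlift_addf; apply: eq_tlift => x0 x1.
  by rewrite /pi_contract tmkDr piD epsD (rmod_actDr (comod_rmod X)).
- by rewrite /contract gD comod_coact_additive (tlift_additive (pi_contract_balanced X d)).
rewrite /contract gA /= comod_coactr tlift_tract; last exact: pi_contract_balanced.
by apply: eq_tlift => x0 x1; rewrite /pi_contract tmk_mid.
Qed.

Lemma cofree_extend_tmk n d : cofree_extend g (tmk (ra:=act N) (la:=la) n d) = contract d (g n).
Proof. by rewrite /cofree_extend tlift_tmk. Qed.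

Lemma cofree_extend_additive : additive (cofree_extend g).
Proof. exact: tlift_additive extend_balanced. Qed.

Lemma cofree_extend_act t r : cofree_extend g (cofree_act t r) = cact X (cofree_extend g t) r.
Proof.
have actXD := rmod_act_additive (comod_rmod X) r.
rewrite /cofree_extend /cofree_act tlift_tract // (tlift_comp actXD).
apply: eq_tlift => n d; rewrite /contract (tlift_comp actXD).
apply: eq_tlift => x0 x1; rewrite /pi_contract (rmod_actA (comod_rmod X)).
by rewrite -(tract_tmk (raD r) (fun r' n => actC r' n r)) (frobsys_pir Dfs) epsr.
Qed.

Lemma cofree_extend_chom : chom (cofree_extend g).
Proof.
split; first by split; [exact: cofree_extend_additive | exact: cofree_extend_act].
have extb : balanced (@cofree_act N) la
    (fun m c => tmk (ra:=cact X) (la:=la) (cofree_extend g m) c).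
  exact: tmk_map_balanced cofree_extend_additive cofree_extend_act.
apply: eq_additive_tensor.
- by move=> x y; rewrite cofree_extend_additive comod_coact_additive.
- by move=> x y /=; rewrite cofree_coact_additive (tlift_additive extb).
move=> n d /=; rewrite cofree_extend_tmk cofree_coact_tmk (tlift_tlift extb).
rewrite (eq_tlift (g := fun a b => tmk (ra:=cact X) (la:=la) (contract a (g n)) b)).
  by rewrite contract_coact contract_Delta.
by move=> a b; rewrite (tlift_tmk extb) cofree_extend_tmk.
Qed.

Lemma cofree_extendK : cofree_restrict (cofree_extend g) = g.
Proof.
apply: funext => n; rewrite /cofree_restrict cofree_extend_tmk /contract.
rewrite -[RHS](comod_counit (g n)); apply: eq_tlift => x0 x1.
by rewrite /pi_contract (frobsys_pi_c_e Dfs).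
Qed.

End CofreeExtend.

Lemma cofree_restrictK (N : rmod) (X : como) (f : cofree N -> X) :
  chom f -> cofree_extend (cofree_restrict f) = f.
Proof.
move=> f_chom; have fD := comodhom_additive f_chom; have fA := comodhom_act f_chom.
apply: funext => t; rewrite /cofree_extend -{2}(tlift_tmk_id t) (tlift_comp fD).
apply: eq_tlift => n d; rewrite /contract /cofree_restrict (comodhom_coact f_chom).
have fb : balanced (@cofree_act N) la (fun m c => tmk (ra:=cact X) (la:=la) (f m) c).
  exact: tmk_map_balanced.
rewrite /= cofree_coact_tmk (tlift_tlift fb) (tlift_tlift (pi_contract_balanced X d)).
rewrite (eq_tlift (g := fun a b => f (tmk (ra:=act N) (la:=la) n (pi_contractD d a b)))).
  rewrite -(tlift_comp (h := fun z => f (tmk (ra:=act N) (la:=la) n z))).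
    by rewrite tlift_pi_contractD (frobsys_pi_e_c Dfs).
  by move=> a b; rewrite tmkDr fD.
move=> a b; rewrite (tlift_tmk fb) (tlift_tmk (pi_contract_balanced X d)) /pi_contract.
by rewrite -fA /= cofree_act_tmk.
Qed.

Lemma cofree_restrict_natural (N N' : rmod) (X X' : como) (h : N' -> N) (f : cofree N -> X)
  (g : X -> X') : rhom h -> chom f -> chom g ->
  cofree_restrict (g \o f \o cofree_map h) = g \o cofree_restrict f \o h.
Proof. by move=> h_rhom _ _; apply: funext => n; rewrite /cofree_restrict /= cofree_map_tmk. Qed.

Lemma cofree_forget_adjoint : forget_right_adjoint (G := cofree) cofree_map.
Proof.
exists cofree_restrict, cofree_extend; split.
- exact: cofree_restrict_rhom.
- exact: cofree_extend_chom.
- exact: cofree_restrictK.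
- exact: cofree_extendK.
- exact: cofree_restrict_natural.
Qed.

Theorem frobenius_system_coring : frobenius_coring mR oR Delta eps.
Proof.
exists cofree, cofree_map; split.
- exact: cofree_map_chom.
- exact: cofree_map_id.
- exact: cofree_map_comp.
- exact: forget_cofree_adjoint.
- exact: cofree_forget_adjoint.
Qed.

End FrobeniusSystemCoring.

(** * Corings with bilinear comultiplication *)

Section BilinearCoring.
Context (R S : zmodType) (mR : R -> R -> R) (oR : R) (mS : S -> S -> S) (oS : S) (ph : R -> S).
Local Notation rS := (fun s r => mS s (ph r)).
Local Notation lS := (fun r s => mS (ph r) s).
Context (DS : S -> tensor rS lS) (eS : S -> R).
Hypotheses (Sring : is_ring mS oS) (ph_rhom : is_rhom mR oR mS oS ph)
  (Scor : is_coring mR oR DS eS)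
  (DSMl : forall s s', DS (mS s s') = tlact mS s (DS s'))
  (DSMr : forall s s', DS (mS s s') = tract mS (DS s) s').

Let mSA := ring_mulA Sring.
Let phD := rhom_additive ph_rhom.
Let phM := rhomM ph_rhom.
Let eSD := coring_eps_additive Scor.
Let eSl := coring_epsl Scor.
Let eSr := coring_epsr Scor.

Let counitr_balanced : balanced rS lS (fun a b => mS a (ph (eS b))).
Proof. exact: coring_counitr_balanced Scor. Qed.

(* [DS oS = \sum_i a_i (x) b_i] is a dual basis of S over R, with coordinate forms [eS (b_i _)]. *)
Lemma bilinear_coring_dual_basis s : tlift (fun a b => mS a (ph (eS (mS b s)))) (DS oS) = s.
Proof.
transitivity (tlift (fun a b => mS a (ph (eS b))) (tract mS (DS oS) s)).
  by rewrite tlift_tract.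
by rewrite -DSMr (ring_mul1r Sring) (coring_counitr Scor).
Qed.

Lemma bilinear_coring_dual_basis_l s : tlift (fun a b => mS (ph (eS (mS s a))) b) (DS oS) = s.
Proof.
have counitl_balanced : balanced rS lS (fun a b => mS (ph (eS a)) b).
  exact: coring_counitl_balanced Scor.
transitivity (tlift (fun a b => mS (ph (eS a)) b) (tlact mS s (DS oS))).
  by rewrite tlift_tlact.
by rewrite -DSMl (ring_mulr1 Sring) (coring_counitl Scor).
Qed.

Lemma bilinear_coring_frobenius_extension : frobenius_extension mR oR mS oS ph.
Proof.
split.
  pose l := trepr (DS oS); pose n := size l; pose b i := nth (0, 0) l i.
  exists n, (fun s (i : 'I_n) => eS (mS (b i).2 s)),
    (fun v => \sum_(i < n) mS (b i).1 (ph (v i))); split.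
  - by move=> s s' i; rewrite (ring_mulDr Sring) eSD.
  - by move=> s r i; rewrite mSA eSr.
  - move=> v w; rewrite -big_split /=; apply: eq_bigr => i _.
    by rewrite phD (ring_mulDr Sring).
  - move=> v r; rewrite (additive_sum _ _ (ring_mull_additive Sring (ph r))).
    by apply: eq_bigr => i _; rewrite phM mSA.
  move=> s; rewrite -[RHS](bilinear_coring_dual_basis s) /tlift -/l.
  by rewrite (big_nth (0, 0)) big_mkord.
exists (fun s x => eS (mS s x)); split.
- move=> s; split=> [x y|x r]; first by rewrite (ring_mulDr Sring) eSD.
  by rewrite mSA eSr.
- by move=> s s'; apply: funext => x; rewrite (ring_mulDl Sring) eSD.
- move=> s s' ss'; rewrite -(bilinear_coring_dual_basis_l s) -(bilinear_coring_dual_basis_l s').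
  by apply: eq_tlift => a b; rewrite (congr1 (fun f => f a) ss').
- move=> g gD gA; exists (tlift (fun a b => mS (ph (g a)) b) (DS oS)).
  apply: funext => x.
  have mulxD : additive (fun y => eS (mS y x)) by move=> y z; rewrite (ring_mulDl Sring) eSD.
  rewrite (tlift_comp mulxD).
  rewrite (eq_tlift (g := fun a b => g (mS a (ph (eS (mS b x)))))); last first.
    by move=> a b /=; rewrite -mSA eSl gA.
  by rewrite -(tlift_comp gD) bilinear_coring_dual_basis.
split=> [r s|s s']; apply: funext => x; last by rewrite mSA.
by rewrite -mSA eSl.
Qed.

Lemma bilinear_coring_frobenius_system : frobenius_system DS (tlift mS) oS.
Proof.
have mSb : balanced rS lS mS.
  apply: mk_balanced => [s x y|s x y|s r s'].
  - by rewrite /= (ring_mulDr Sring).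
  - by rewrite /= (ring_mulDl Sring).
  by rewrite /= mSA.
split.
- by move=> r; rewrite (ring_mul1r Sring) (ring_mulr1 Sring).
- split; first exact: tlift_additive mSb.
    move=> r x; rewrite tlift_tlact // (tlift_comp (ring_mulr_additive Sring (ph r))).
    by apply: eq_tlift => m n; rewrite mSA.
  move=> x r; rewrite tlift_tract // (tlift_comp (ring_mull_additive Sring (ph r))).
  by apply: eq_tlift => m n; rewrite mSA.
- move=> c c'; rewrite (tlift_tmk mSb) DSMr /tract.
  by apply: eq_tlift => m n; rewrite (tlift_tmk mSb).
- move=> c c'; rewrite (tlift_tmk mSb) DSMl /tlact.
  by apply: eq_tlift => m n; rewrite (tlift_tmk mSb).
- by move=> c; rewrite !(tlift_tmk mSb) (ring_mul1r Sring) (ring_mulr1 Sring).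
Qed.

Lemma bilinear_coring_frobenius_coring : frobenius_coring mR oR DS eS.
Proof. exact: frobenius_system_coring Scor bilinear_coring_frobenius_system. Qed.

End BilinearCoring.

(** * The ring and coring [S (x)_R S] *)

(* [S] is identified with [R (x)_A C] through [r (x) c |-> ph r * j c], with inverse [dec];
   at level [k] of the tower, [R = C^k] and [S = C^(k+1)]. *)
Record level_spec (A : pzRingType) (C : zmodType) (la : A -> C -> C) (ra : C -> A -> C)
  (R S : zmodType) (mR : R -> R -> R) (oR : R) (mS : S -> S -> S) (oS : S)
  (ph : R -> S) (th : A -> R) (raR : R -> A -> R) (raS : S -> A -> S)
  (DS : S -> tensor (fun s r => mS s (ph r)) (fun r s => mS (ph r) s)) (eS : S -> R)
  (j : C -> S) (dec : S -> tensor raR la) : Prop := {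
  level_ringR : is_ring mR oR;
  level_ringS : is_ring mS oS;
  level_rhom : is_rhom mR oR mS oS ph;
  level_base_rhom : is_rhom ( *%R) 1 mR oR th;
  level_actR : forall r a, raR r a = mR r (th a);
  level_actS : forall s a, raS s a = mS s (ph (th a));
  level_coring : is_coring mR oR DS eS;
  level_DeltaMl : forall s s', DS (mS s s') = tlact mS s (DS s');
  level_DeltaMr : forall s s', DS (mS s s') = tract mS (DS s) s';
  level_j_additive : additive j;
  level_jl : forall a c, j (la a c) = mS (ph (th a)) (j c);
  level_jr : forall c a, j (ra c a) = mS (j c) (ph (th a));
  level_dec_additive : additive dec;
  level_decK : forall s, tlift (fun r c => mS (ph r) (j c)) (dec s) = s;
  level_dec_gen : forall r c, dec (mS (ph r) (j c)) = tmk r c }.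

Section NextLevel.
Context (A : pzRingType) (C : zmodType) (la : A -> C -> C) (ra : C -> A -> C).
Context (R S : zmodType) (mR : R -> R -> R) (oR : R) (mS : S -> S -> S) (oS : S)
  (ph : R -> S) (th : A -> R) (raR : R -> A -> R) (raS : S -> A -> S).
Local Notation rS := (fun s r => mS s (ph r)).
Local Notation lS := (fun r s => mS (ph r) s).
Context (DS : S -> tensor rS lS) (eS : S -> R) (j : C -> S) (dec : S -> tensor raR la).
Hypothesis L : @level_spec A C la ra R S mR oR mS oS ph th raR raS DS eS j dec.

Local Notation T := (tensor raS la).
Local Notation tmkT := (@tmk A S C raS la).

Let Sring := level_ringS L.
Let mSA := ring_mulA Sring.
Let mS1r := ring_mul1r Sring.
Let mSr1 := ring_mulr1 Sring.
Let mSDl := ring_mulDl Sring.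
Let mSDr := ring_mulDr Sring.
Let mSrD := ring_mulr_additive Sring.
Let phD := rhom_additive (level_rhom L).
Let phM := rhomM (level_rhom L).
Let ph1 := rhom1 (level_rhom L).
Let raS_mul := level_actS L.
Let Scor := level_coring L.
Let DSD := coring_Delta_additive Scor.
Let eSD := coring_eps_additive Scor.
Let eSl := coring_epsl Scor.
Let eSr := coring_epsr Scor.
Let counitr_balanced := coring_counitr_balanced Scor.
Let jD := level_j_additive L.
Let jl := level_jl L.
Let jr := level_jr L.
Let dec_gen := level_dec_gen L.

Let raS_mulA s0 m a : mS s0 (raS m a) = raS (mS s0 m) a.
Proof. by rewrite !raS_mul mSA. Qed.

Lemma eq_additive_on_gen (G : zmodType) (F F' : S -> G) : additive F -> additive F' ->
  (forall r c, F (mS (ph r) (j c)) = F' (mS (ph r) (j c))) -> forall s, F s = F' s.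
Proof.
move=> FD F'D FF' s; rewrite -(level_decK L s) (tlift_comp FD) (tlift_comp F'D).
exact: eq_tlift.
Qed.

(* [tmkR s s'] is the image of [s (x)_R s'] under [S (x)_R S ~= S (x)_R R (x)_A C ~= T]. *)
Definition tmkR (s s' : S) : T := tlift (fun r c => tmkT (mS s (ph r)) c) (dec s').

Let tmkR_gen_balanced s : balanced raR la (fun r c => tmkT (mS s (ph r)) c).
Proof.
apply: mk_balanced => [r c c'|c r r'|r a c]; first exact: tmkDr.
  by rewrite phD mSDr tmkDl.
by rewrite (level_actR L) phM mSA -raS_mul tmk_mid.
Qed.

Lemma tmkR_gen s r c : tmkR s (mS (ph r) (j c)) = tmkT (mS s (ph r)) c.
Proof. by rewrite /tmkR dec_gen tlift_tmk. Qed.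

Lemma tmkR_additive_r s : additive (tmkR s).
Proof.
by move=> x y; rewrite /tmkR (level_dec_additive L) (tlift_additive (tmkR_gen_balanced s)).
Qed.

Lemma tmkR_additive_l s' : additive (tmkR^~ s').
Proof.
by move=> x y; rewrite /tmkR -tlift_addf; apply: eq_tlift => r c; rewrite mSDl tmkDl.
Qed.

Lemma tmkR_mid s r s' : tmkR (mS s (ph r)) s' = tmkR s (mS (ph r) s').
Proof.
move: s'; apply: eq_additive_on_gen; first exact: tmkR_additive_r.
  by move=> x y; rewrite mSDr tmkR_additive_r.
by move=> r' c; rewrite tmkR_gen mSA -phM tmkR_gen phM mSA.
Qed.

Lemma tmkR_balanced : balanced rS lS tmkR.
Proof. exact: mk_balanced tmkR_additive_r tmkR_additive_l tmkR_mid. Qed.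

Lemma tmkR_j s c : tmkR s (j c) = tmkT s c.
Proof. by rewrite -[j c]mS1r -ph1 tmkR_gen ph1 mSr1. Qed.

Lemma tmkR_mull s0 s s' : tmkR (mS s0 s) s' = tlact mS s0 (tmkR s s').
Proof.
move: s'; apply: eq_additive_on_gen; first exact: tmkR_additive_r.
  by move=> x y; rewrite tmkR_additive_r (tlact_additive (mSrD s0) (raS_mulA s0)).
by move=> r c; rewrite !tmkR_gen (tlact_tmk (mSrD s0) (raS_mulA s0)) mSA.
Qed.

Lemma tmkR_counit x y : tlift (fun a b => tmkR (mS x (ph (eS a))) b) (DS y) = tmkR x y.
Proof.
rewrite (eq_tlift (g := fun a b => tmkR x (mS (ph (eS a)) b))); last first.
  by move=> a b; rewrite tmkR_mid.
by rewrite -(tlift_comp (tmkR_additive_r x)) (coring_counitl Scor).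
Qed.

(* The product of [S (x)_R S]: [(s (x) s') (t (x) t') = s eS (s' t) (x) t']. *)
Definition mulT_gen (s : S) (c : C) (s' : S) (c' : C) : T :=
  tmkT (mS s (ph (eS (mS (j c) s')))) c'.

Let mulT_gen_balanced s c : balanced raS la (mulT_gen s c).
Proof.
apply: mk_balanced => [s' x y|y x x'|s' a c']; first exact: tmkDr.
  by rewrite /mulT_gen mSDr eSD phD mSDr tmkDl.
by rewrite /mulT_gen raS_mul mSA eSr phM mSA -raS_mul tmk_mid.
Qed.

Definition mulT (t t' : T) : T := tlift (fun s c => tlift (mulT_gen s c) t') t.

Let mulT_balanced (t' : T) : balanced raS la (fun s c => tlift (mulT_gen s c) t').
Proof.
apply: mk_balanced => [s c c'|c s s'|s a c].
- rewrite -tlift_addf; apply: eq_tlift => x y.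
  by rewrite /mulT_gen jD mSDl eSD phD mSDr tmkDl.
- by rewrite -tlift_addf; apply: eq_tlift => x y; rewrite /mulT_gen mSDl tmkDl.
by apply: eq_tlift => x y; rewrite /mulT_gen raS_mul jl -!mSA eSl phM.
Qed.

Lemma mulT_tmk s c s' c' : mulT (tmkT s c) (tmkT s' c') = mulT_gen s c s' c'.
Proof. by rewrite /mulT tlift_tmk // tlift_tmk. Qed.

Lemma mulT_tmkl s c t' : mulT (tmkT s c) t' = tlift (mulT_gen s c) t'.
Proof. by rewrite /mulT tlift_tmk. Qed.

Lemma mulT_additive_l t' : additive (mulT^~ t').
Proof. exact: tlift_additive (mulT_balanced t'). Qed.

Lemma mulT_additive_r t : additive (mulT t).
Proof.
move=> x y; rewrite /mulT -tlift_addf; apply: eq_tlift => s c.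
exact: (tlift_additive (mulT_gen_balanced s c)).
Qed.

Lemma mulTA : associative mulT.
Proof.
have mulTD := (mulT_additive_l, mulT_additive_r).
move=> t1 t2 t3; move: t1; apply: eq_additive_tensor => [x y|x y|s c] /=; rewrite ?mulTD //.
move: t2; apply: eq_additive_tensor => [x y|x y|s' c'] /=; rewrite ?mulTD //.
move: t3; apply: eq_additive_tensor => [x y|x y|s'' c''] /=; rewrite ?mulTD //.
by rewrite !mulT_tmk /mulT_gen; congr tmk; rewrite mSA eSr phM mSA.
Qed.

Definition phiT (s : S) : T := tlift tmkR (DS s).

Lemma phiT_additive : additive phiT.
Proof. by move=> x y; rewrite /phiT DSD (tlift_additive tmkR_balanced). Qed.

Lemma mulT_tmkR_tmk a b s' c' :
  mulT (tmkR a b) (tmkT s' c') = tmkT (mS a (ph (eS (mS b s')))) c'.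
Proof.
move: b; apply: eq_additive_on_gen.
- by move=> x y /=; rewrite tmkR_additive_r mulT_additive_l.
- by move=> x y /=; rewrite mSDl eSD phD mSDr tmkDl.
move=> r c; rewrite tmkR_gen mulT_tmk /mulT_gen; congr tmk.
by rewrite -[in RHS]mSA eSl phM mSA.
Qed.

Lemma mulT_phiTl s t : mulT (phiT s) t = tlact mS s t.
Proof.
move: t; apply: eq_additive_tensor; first exact: mulT_additive_r.
  exact: (tlact_additive (mSrD s) (raS_mulA s)).
move=> s' c'; rewrite (tlact_tmk (mSrD s) (raS_mulA s)).
rewrite /phiT (tlift_comp (mulT_additive_l _)).
rewrite (eq_tlift (g := fun a b => tmkT (mS a (ph (eS (mS b s')))) c')); last first.
  by move=> a b; rewrite mulT_tmkR_tmk.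
rewrite -(tlift_comp (h := fun y => tmkT y c')); last by move=> x y; rewrite tmkDl.
congr tmk.
transitivity (tlift (fun a b => mS a (ph (eS b))) (tract mS (DS s) s')).
  by rewrite tlift_tract.
by rewrite -(level_DeltaMr L) (coring_counitr Scor).
Qed.

Lemma mulT_gen_tmkR x c a b :
  tlift (mulT_gen x c) (tmkR a b) = tmkR (mS x (ph (eS (mS (j c) a)))) b.
Proof.
move: b; apply: eq_additive_on_gen.
- by move=> y z; rewrite tmkR_additive_r (tlift_additive (mulT_gen_balanced x c)).
- exact: tmkR_additive_r.
move=> r c''; rewrite !tmkR_gen tlift_tmk // /mulT_gen; congr tmk.
by rewrite mSA eSr phM mSA.
Qed.

Let tmkR_counit_balanced x : balanced rS lS (fun a b => tmkR (mS x (ph (eS a))) b).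
Proof.
apply: mk_balanced => [a b b'|b a a'|a r b]; first exact: tmkR_additive_r.
  by rewrite eSD phD mSDr tmkR_additive_l.
by rewrite /= eSr phM mSA tmkR_mid.
Qed.

Lemma mulT_tmk_phiT x c s : mulT (tmkT x c) (phiT s) = tmkR x (mS (j c) s).
Proof.
rewrite mulT_tmkl /phiT (tlift_tlift (mulT_gen_balanced x c)).
rewrite (eq_tlift (g := fun a b => tmkR (mS x (ph (eS (mS (j c) a)))) b)); last first.
  by move=> a b; exact: mulT_gen_tmkR.
transitivity (tlift (fun a b => tmkR (mS x (ph (eS a))) b) (tlact mS (j c) (DS s))).
  by rewrite tlift_tlact.
by rewrite -(level_DeltaMl L) tmkR_counit.
Qed.

Let phiTr_balanced s : balanced raS la (fun x c => tmkR x (mS (j c) s)).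
Proof.
apply: mk_balanced => [x c c'|c x x'|x a c]; first by rewrite jD mSDl tmkR_additive_r.
  exact: tmkR_additive_l.
by rewrite raS_mul tmkR_mid jl mSA.
Qed.

Lemma mulT_phiTr t s : mulT t (phiT s) = tlift (fun x c => tmkR x (mS (j c) s)) t.
Proof.
move: t; apply: eq_additive_tensor; first exact: mulT_additive_l.
  exact: tlift_additive (phiTr_balanced s).
by move=> x c; rewrite mulT_tmk_phiT tlift_tmk.
Qed.

Lemma mulT_tmkR_phiT x z y : mulT (tmkR x z) (phiT y) = tmkR x (mS z y).
Proof.
move: z; apply: eq_additive_on_gen.
- by move=> a b; rewrite tmkR_additive_r mulT_additive_l.
- by move=> a b; rewrite mSDl tmkR_additive_r.
by move=> r c; rewrite tmkR_gen mulT_tmk_phiT tmkR_mid mSA.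
Qed.

Definition oneT := phiT oS.

Lemma mulT_ring : is_ring mulT oneT.
Proof.
split=> [|t|t|x y z|x y z]; first exact: mulTA.
- rewrite /oneT mulT_phiTl /tlact -[RHS]tlift_tmk_id.
  by apply: eq_tlift => m n; rewrite mS1r.
- rewrite /oneT mulT_phiTr -[RHS]tlift_tmk_id.
  by apply: eq_tlift => x c; rewrite mSr1 tmkR_j.
- exact: mulT_additive_l.
- exact: mulT_additive_r.
Qed.

Lemma phiT_rhom : is_rhom mS oS mulT oneT phiT.
Proof.
split=> [||//]; first exact: phiT_additive.
move=> s s'; rewrite mulT_phiTl /phiT (level_DeltaMl L) tlift_tlact; last exact: tmkR_balanced.
rewrite (eq_tlift (g := fun a b => tlact mS s (tmkR a b))); last by move=> a b; rewrite tmkR_mull.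
by rewrite -(tlift_comp (tlact_additive (mSrD s) (raS_mulA s))).
Qed.

Let phiTM := rhomM phiT_rhom.

Lemma tract_phiT t a : tract ra t a = mulT t (phiT (ph (th a))).
Proof. by rewrite mulT_phiTr /tract; apply: eq_tlift => x c; rewrite -jr tmkR_j. Qed.

Definition epsT (t : T) : S := tlift (fun s c => mS s (j c)) t.

Let epsT_balanced : balanced raS la (fun s c => mS s (j c)).
Proof.
apply: mk_balanced => [s c c'|c s s'|s a c]; first by rewrite jD mSDr.
  by rewrite mSDl.
by rewrite raS_mul jl mSA.
Qed.

Lemma epsT_tmk s c : epsT (tmkT s c) = mS s (j c).
Proof. by rewrite /epsT tlift_tmk. Qed.

Lemma epsT_additive : additive epsT.
Proof. exact: tlift_additive epsT_balanced. Qed.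

Lemma epsT_tmkR x y : epsT (tmkR x y) = mS x y.
Proof.
move: y; apply: eq_additive_on_gen => [a b|a b|r c]; first by rewrite tmkR_additive_r epsT_additive.
  exact: mSrD.
by rewrite tmkR_gen epsT_tmk mSA.
Qed.

Lemma epsTl s t : epsT (mulT (phiT s) t) = mS s (epsT t).
Proof.
move: t; apply: eq_additive_tensor => [x y|x y|x c] /=.
- by rewrite mulT_additive_r epsT_additive.
- by rewrite epsT_additive mSDr.
by rewrite mulT_phiTl (tlact_tmk (mSrD s) (raS_mulA s)) !epsT_tmk mSA.
Qed.

Lemma epsTr t s : epsT (mulT t (phiT s)) = mS (epsT t) s.
Proof.
move: t; apply: eq_additive_tensor => [x y|x y|x c] /=.
- by rewrite mulT_additive_l epsT_additive.
- by rewrite epsT_additive mSDl.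
by rewrite mulT_tmk_phiT epsT_tmkR epsT_tmk mSA.
Qed.

Definition jT (c : C) : T := tmkT oS c.

Lemma phiT_jT s c : mulT (phiT s) (jT c) = tmkT s c.
Proof. by rewrite mulT_phiTl (tlact_tmk (mSrD s) (raS_mulA s)) mSr1. Qed.

Lemma jT_additive : additive jT.
Proof. by move=> x y; rewrite /jT tmkDr. Qed.

Lemma jTl a c : jT (la a c) = mulT (phiT (ph (th a))) (jT c).
Proof. by rewrite phiT_jT /jT -tmk_mid raS_mul mS1r. Qed.

Lemma jTr c a : jT (ra c a) = mulT (jT c) (phiT (ph (th a))).
Proof. by rewrite {2}/jT mulT_tmk_phiT -jr tmkR_j. Qed.

Lemma tlift_phiT_jT t : tlift (fun s c => mulT (phiT s) (jT c)) t = t.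
Proof. by rewrite -[RHS]tlift_tmk_id; apply: eq_tlift => s c; rewrite phiT_jT. Qed.

Local Notation raT := (fun t s => mulT t (phiT s)).
Local Notation laT := (fun s t => mulT (phiT s) t).
Local Notation tmkTT := (@tmk S T T raT laT).

Let laT_mulA s m r : mulT (phiT s) (mulT m (phiT r)) = mulT (mulT (phiT s) m) (phiT r).
Proof. exact: mulTA. Qed.
Let mulT_raTA t m r : mulT t (mulT m (phiT r)) = mulT (mulT t m) (phiT r).
Proof. exact: mulTA. Qed.
Let laT_mulTA t' r n : mulT (phiT r) (mulT n t') = mulT (mulT (phiT r) n) t'.
Proof. exact: mulTA. Qed.

(* The comultiplication of the Sweedler coring [S (x)_R S]:
   [s (x) s' |-> (s (x) 1) (x)_S (1 (x) s')]. *)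
Definition DeltaT (t : T) : tensor raT laT := tlift (fun s c => tmkTT (tmkR s oS) (jT c)) t.

Let DeltaT_balanced : balanced raS la (fun s c => tmkTT (tmkR s oS) (jT c)).
Proof.
apply: mk_balanced => [s c c'|c s s'|s a c]; first by rewrite jT_additive tmkDr.
  by rewrite tmkR_additive_l tmkDl.
have oS_central : mS (ph (th a)) oS = mS oS (ph (th a)) by rewrite mS1r mSr1.
by rewrite raS_mul tmkR_mid oS_central -mulT_tmkR_phiT tmk_mid phiT_jT /jT -tmk_mid raS_mul mS1r.
Qed.

Lemma DeltaT_tmk s c : DeltaT (tmkT s c) = tmkTT (tmkR s oS) (jT c).
Proof. by rewrite /DeltaT tlift_tmk. Qed.

Lemma DeltaT_additive : additive DeltaT.
Proof. exact: tlift_additive DeltaT_balanced. Qed.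

Lemma DeltaT_tmkR x y : DeltaT (tmkR x y) = tmkTT (tmkR x oS) (tmkR oS y).
Proof.
move: y; apply: eq_additive_on_gen => [a b|a b|r c].
- by rewrite tmkR_additive_r DeltaT_additive.
- by rewrite tmkR_additive_r tmkDr.
have oS_central : mS (ph r) oS = mS oS (ph r) by rewrite mS1r mSr1.
rewrite !tmkR_gen DeltaT_tmk tmkR_mid oS_central -mulT_tmkR_phiT tmk_mid phiT_jT.
by rewrite mS1r.
Qed.

Lemma DeltaT_mulTl t t' : DeltaT (mulT t t') = tlact mulT t (DeltaT t').
Proof.
move: t; apply: eq_additive_tensor => [x y|x y|x c] /=.
- by rewrite mulT_additive_l DeltaT_additive.
- by apply: tlact_additive_scalar => m; exact: mulT_additive_l.
move: t'; apply: eq_additive_tensor => [x' y'|x' y'|x' c'] /=.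
- by rewrite mulT_additive_r DeltaT_additive.
- by rewrite DeltaT_additive (tlact_additive (mulT_additive_r _) (mulT_raTA _)).
rewrite mulT_tmk !DeltaT_tmk (tlact_tmk (mulT_additive_r _) (mulT_raTA _)).
by rewrite mulT_tmkl mulT_gen_tmkR.
Qed.

Lemma mulT_jT_tmk c x' c' : mulT (jT c) (tmkT x' c') = tmkT (ph (eS (mS (j c) x'))) c'.
Proof. by rewrite /jT mulT_tmk /mulT_gen mS1r. Qed.

Lemma DeltaT_mulTr t t' : DeltaT (mulT t t') = tract mulT (DeltaT t) t'.
Proof.
move: t; apply: eq_additive_tensor => [x y|x y|x c] /=.
- by rewrite mulT_additive_l DeltaT_additive.
- by rewrite DeltaT_additive (tract_additive (mulT_additive_l t') (laT_mulTA t')).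
move: t'; apply: eq_additive_tensor => [x' y'|x' y'|x' c'] /=.
- by rewrite mulT_additive_r DeltaT_additive.
- by apply: tract_additive_scalar => n; exact: mulT_additive_r.
rewrite mulT_tmk !DeltaT_tmk (tract_tmk (mulT_additive_l _) (laT_mulTA _)).
by rewrite mulT_jT_tmk tmkR_mid mSr1 -phiT_jT -tmk_mid mulT_tmkR_phiT mS1r.
Qed.

Local Notation tmk3 := (@tmk S T (tensor raT laT) raT (tlact (ra:=raT) (la:=laT) laT)).

Let coass_lhs_gen (t2 : T) := fun a b : T => tmk3 a (tmkTT b t2).

Let coass_lhs_gen_balanced t2 : balanced raT laT (coass_lhs_gen t2).
Proof.
apply: mk_balanced => [a b b'|b a a'|a r b]; rewrite /coass_lhs_gen.
- by rewrite tmkDl tmkDr.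
- by rewrite tmkDl.
by rewrite /= tmk_mid (tlact_tmk (laM := laT) (s := r) (mulT_additive_r (phiT r)) (laT_mulA r)).
Qed.

Let coass_lhs (t1 t2 : T) := tlift (coass_lhs_gen t2) (DeltaT t1).

Let coass_lhs_balanced : balanced raT laT coass_lhs.
Proof.
apply: mk_balanced => [t1 x y|t2 x y|t1 s t2]; rewrite /coass_lhs.
- by rewrite -tlift_addf; apply: eq_tlift => a b; rewrite /coass_lhs_gen !tmkDr.
- by rewrite DeltaT_additive (tlift_additive (coass_lhs_gen_balanced t2)).
rewrite /= DeltaT_mulTr tlift_tract //; apply: eq_tlift => a b.
by rewrite /coass_lhs_gen tmk_mid.
Qed.

Let coass_rhs (t1 t2 : T) := tmk3 t1 (DeltaT t2).

Let coass_rhs_balanced : balanced raT laT coass_rhs.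
Proof.
apply: mk_balanced => [t1 x y|t2 x y|t1 s t2]; rewrite /coass_rhs.
- by rewrite DeltaT_additive tmkDr.
- by rewrite tmkDl.
by rewrite /= tmk_mid DeltaT_mulTl.
Qed.

Lemma DeltaT_coassoc t : tlift coass_lhs (DeltaT t) = tlift coass_rhs (DeltaT t).
Proof.
move: t; apply: eq_additive_tensor => [x y|x y|x c].
- by rewrite DeltaT_additive (tlift_additive coass_lhs_balanced).
- by rewrite DeltaT_additive (tlift_additive coass_rhs_balanced).
rewrite DeltaT_tmk (tlift_tmk coass_lhs_balanced) (tlift_tmk coass_rhs_balanced).
rewrite /coass_lhs /coass_rhs DeltaT_tmkR (tlift_tmk (coass_lhs_gen_balanced _)).
by rewrite /coass_lhs_gen /jT DeltaT_tmk.
Qed.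

Let counitl_gen (t1 t2 : T) := mulT (phiT (epsT t1)) t2.

Let counitl_gen_balanced : balanced raT laT counitl_gen.
Proof.
apply: mk_balanced => [t1 x y|t2 x y|t1 s t2]; rewrite /counitl_gen.
- by rewrite mulT_additive_r.
- by rewrite epsT_additive phiT_additive mulT_additive_l.
by rewrite /= epsTr phiTM mulTA.
Qed.

Let counitr_gen (t1 t2 : T) := mulT t1 (phiT (epsT t2)).

Let counitr_gen_balanced : balanced raT laT counitr_gen.
Proof.
apply: mk_balanced => [t1 x y|t2 x y|t1 s t2]; rewrite /counitr_gen.
- by rewrite epsT_additive phiT_additive mulT_additive_r.
- by rewrite mulT_additive_l.
by rewrite /= epsTl phiTM mulTA.
Qed.

Lemma DeltaT_counit t : tlift counitl_gen (DeltaT t) = t /\ tlift counitr_gen (DeltaT t) = t.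
Proof.
split; move: t; apply: eq_additive_tensor => //.
- by move=> x y; rewrite DeltaT_additive (tlift_additive counitl_gen_balanced).
- move=> x c; rewrite DeltaT_tmk (tlift_tmk counitl_gen_balanced) /counitl_gen.
  by rewrite epsT_tmkR mSr1 phiT_jT.
- by move=> x y; rewrite DeltaT_additive (tlift_additive counitr_gen_balanced).
move=> x c; rewrite DeltaT_tmk (tlift_tmk counitr_gen_balanced) /counitr_gen mulT_tmkR_phiT /jT.
by rewrite epsT_tmk !mS1r tmkR_j.
Qed.

Lemma DeltaT_coring : is_coring mS oS DeltaT epsT.
Proof.
split.
- exact: rhom_bimod phiT_rhom mulT_ring.
- split=> [|s t|t s]; [exact: DeltaT_additive | exact: DeltaT_mulTl | exact: DeltaT_mulTr].
- split=> [|s t|t s]; [exact: epsT_additive | exact: epsTl | exact: epsTr].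
- exact: DeltaT_coassoc.
- exact: DeltaT_counit.
Qed.

Lemma level_spec_next : @level_spec A C la ra S T mS oS mulT oneT phiT (fun a => ph (th a))
  raS (tract ra) DeltaT epsT jT id.
Proof.
split=> //.
- exact: mulT_ring.
- exact: phiT_rhom.
- exact: rhom_comp (level_base_rhom L) (level_rhom L).
- exact: tract_phiT.
- exact: DeltaT_coring.
- exact: DeltaT_mulTl.
- exact: DeltaT_mulTr.
- exact: jT_additive.
- exact: jTl.
- exact: jTr.
- exact: tlift_phiT_jT.
- exact: phiT_jT.
Qed.

End NextLevel.

Lemma level_spec_frobenius (A : pzRingType) (C : zmodType) (la : A -> C -> C)
  (ra : C -> A -> C) (R S : zmodType) (mR : R -> R -> R) (oR : R) (mS : S -> S -> S) (oS : S)
  (ph : R -> S) (th : A -> R) (raR : R -> A -> R) (raS : S -> A -> S)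
  (DS : S -> tensor (fun s r => mS s (ph r)) (fun r s => mS (ph r) s)) (eS : S -> R)
  (j : C -> S) (dec : S -> tensor raR la) :
  @level_spec A C la ra R S mR oR mS oS ph th raR raS DS eS j dec ->
  frobenius_extension mR oR mS oS ph /\ frobenius_coring mR oR DS eS.
Proof.
case=> _ Sring ph_rhom _ _ _ Scor DSMl DSMr _ _ _ _ _ _.
split; first exact: bilinear_coring_frobenius_extension Sring ph_rhom Scor DSMl DSMr.
exact: bilinear_coring_frobenius_coring Sring Scor DSMl DSMr.
Qed.

Lemma phiT_next_tmk (A : pzRingType) (C : zmodType) (la : A -> C -> C) (ra : C -> A -> C)
  (R S : zmodType) (mR : R -> R -> R) (oR : R) (mS : S -> S -> S) (oS : S)
  (ph : R -> S) (th : A -> R) (raR : R -> A -> R) (raS : S -> A -> S)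
  (DS : S -> tensor (fun s r => mS s (ph r)) (fun r s => mS (ph r) s)) (eS : S -> R)
  (j : C -> S) (dec : S -> tensor raR la) :
  @level_spec A C la ra R S mR oR mS oS ph th raR raS DS eS j dec ->
  forall s c, phiT (tract ra) (DeltaT oS DS eS j dec) id (tmk (ra:=raS) (la:=la) s c)
              = tmk (tmkR mS ph raS dec s oS) c.
Proof.
move=> L s c; have L' := level_spec_next L.
by rewrite /phiT (DeltaT_tmk L) (tlift_tmk (tmkR_balanced L')) (tmkR_j L').
Qed.

(** * The tower of the [C^k] *)

Definition tcast (R : Type) (M N : zmodType) (ra : M -> R -> M) (la : R -> N -> N)
  (ra' : M -> R -> M) (la' : R -> N -> N) (x : tensor ra la) : tensor ra' la' := tlift tmk x.
Arguments tcast {R M N ra la} ra' la' x.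

Section TensorCast.
Context (R : Type) (M N : zmodType) (ra : M -> R -> M) (la : R -> N -> N).
Variables (ra' : M -> R -> M) (la' : R -> N -> N).

Lemma tcastK : ra' = ra -> la' = la -> forall x : tensor ra la, tcast ra la (tcast ra' la' x) = x.
Proof. by move=> -> -> x; rewrite /tcast !tlift_tmk_id. Qed.

Lemma tcast_tlact : ra' = ra -> la' = la ->
  forall (S : Type) (laM : S -> M -> M) s (x : tensor ra la),
  tcast ra' la' (tlact laM s x) = tlact laM s (tcast ra' la' x).
Proof. by move=> -> -> S laM s x; rewrite /tcast !tlift_tmk_id. Qed.

Lemma tcast_tract : ra' = ra -> la' = la ->
  forall (S : Type) (raN : N -> S -> N) s (x : tensor ra la),
  tcast ra' la' (tract raN x s) = tract raN (tcast ra' la' x) s.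
Proof. by move=> -> -> S raN s x; rewrite /tcast !tlift_tmk_id. Qed.

End TensorCast.

Lemma tcast_coring (R : zmodType) (mR : R -> R -> R) (oR : R) (C : zmodType)
  (la la' : R -> C -> C) (ra ra' : C -> R -> C) (Delta : C -> tensor ra la) (eps : C -> R) :
  ra' = ra -> la' = la -> is_coring mR oR Delta eps ->
  is_coring mR oR (fun c => tcast ra' la' (Delta c)) eps.
Proof.
move=> -> -> Ccor.
suff -> : (fun c => tcast ra la (Delta c)) = Delta by [].
by apply: funext => c; rewrite /tcast tlift_tmk_id.
Qed.

Section Tower.
Context (A : pzRingType) (C : zmodType) (la : A -> C -> C) (ra : C -> A -> C)
  (Delta : C -> tensor ra la) (eps : C -> A) (pi : tensor ra la -> C) (e : C).

Local Notation Cp := (Cpow la ra).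

Definition Cpow_act (k : nat) : Cp k -> A -> Cp k :=
  match k return Cp k -> A -> Cp k with
  | 0 => fun r a : A => r * a
  | k'.+1 => projT2 (Cpos la ra k')
  end.

Record level (k : nat) := Level {
  lv_mulR : Cp k -> Cp k -> Cp k; lv_oneR : Cp k;
  lv_mulS : Cp k.+1 -> Cp k.+1 -> Cp k.+1; lv_oneS : Cp k.+1;
  lv_phi : Cp k -> Cp k.+1; lv_theta : A -> Cp k;
  lv_Delta : Cp k.+1 ->
    tensor (fun s r => lv_mulS s (lv_phi r)) (fun r s => lv_mulS (lv_phi r) s);
  lv_eps : Cp k.+1 -> Cp k;
  lv_j : C -> Cp k.+1;
  lv_dec : Cp k.+1 -> tensor (@Cpow_act k) la }.

Definition mulC (c c' : C) : C := pi (tmk c c').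
Definition Theta (a : A) : C := la a e.

(* [Delta] with the actions of [C] over [A] induced by [Theta]; these are provably, but not
   convertibly, [ra] and [la]. *)
Definition Delta_Theta (c : C) :=
  tcast (fun s r => mulC s (Theta r)) (fun r s => mulC (Theta r) s) (Delta c).

Definition level0 : level 0 :=
  @Level 0 ( *%R) 1 mulC e Theta id Delta_Theta eps id (tmk (ra:=@Cpow_act 0) (la:=la) 1).

Definition next_level k (L : level k) : level k.+1 :=
  let raS := projT2 (Cpos la ra k) in
  @Level k.+1 (lv_mulS L) (lv_oneS L)
    (mulT (lv_mulS L) (lv_phi L) (lv_eps L) (lv_j L))
    (oneT (lv_oneS L) raS (lv_Delta L) (lv_dec L))
    (phiT raS (lv_Delta L) (lv_dec L))
    (fun a => lv_phi L (lv_theta L a))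
    (DeltaT (lv_oneS L) (lv_Delta L) (lv_eps L) (lv_j L) (lv_dec L))
    (epsT (lv_mulS L) (lv_j L))
    (jT la (lv_oneS L) raS)
    id.

Fixpoint tower (k : nat) : level k :=
  if k is k'.+1 then next_level (tower k') else level0.

Definition level_ok k (L : level k) : Prop :=
  @level_spec A C la ra (Cp k) (Cp k.+1) (lv_mulR L) (lv_oneR L) (lv_mulS L) (lv_oneS L)
    (lv_phi L) (lv_theta L) (@Cpow_act k) (projT2 (Cpos la ra k)) (lv_Delta L) (lv_eps L)
    (lv_j L) (lv_dec L).

Hypotheses (Ccor : is_coring ( *%R) 1 Delta eps) (Cfs : frobenius_system Delta pi e).

Let Clmod := coring_lmod Ccor.
Let actC := coring_actC Ccor.
Let epsD := coring_eps_additive Ccor.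
Let laD := coring_la_additive Ccor.
Let raD := coring_ra_additive Ccor.
Let piD := frobsys_pi_additive Cfs.

Let mulC_lA a x y : mulC (la a x) y = la a (mulC x y).
Proof. by rewrite /mulC -(tlact_tmk (laD a) (fun m s => actC a m s)) (frobsys_pil Cfs). Qed.

Let mulC_rA x y a : mulC x (ra y a) = ra (mulC x y) a.
Proof. by rewrite /mulC -(tract_tmk (raD a) (fun r n => actC r n a)) (frobsys_pir Cfs). Qed.

Lemma mulC_Thetal a c : mulC (Theta a) c = la a c.
Proof. by rewrite /Theta mulC_lA /mulC (frobsys_pi_e_c Cfs). Qed.

Lemma mulC_Thetar c a : mulC c (Theta a) = ra c a.
Proof. by rewrite /Theta (frobsys_e_central Cfs) mulC_rA /mulC (frobsys_pi_c_e Cfs). Qed.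

Let raE : (fun s r => mulC s (Theta r)) = ra.
Proof. by apply: funext => s; apply: funext => r; rewrite mulC_Thetar. Qed.
Let laE : (fun r s => mulC (Theta r) s) = la.
Proof. by apply: funext => r; apply: funext => s; rewrite mulC_Thetal. Qed.

Let mulC_additive_l y : additive (mulC^~ y). Proof. by move=> a b; rewrite /mulC tmkDl piD. Qed.
Let mulC_additive_r x : additive (mulC x). Proof. by move=> a b; rewrite /mulC tmkDr piD. Qed.

Let Delta_mulCr x y : Delta (mulC x y) = tract mulC (Delta x) y.
Proof. exact: (frobsys_Delta_pil Cfs x y). Qed.
Let Delta_mulCl x y : Delta (mulC x y) = tlact mulC x (Delta y).
Proof. exact: (frobsys_Delta_pir Cfs x y). Qed.

Lemma mulC_eps_expansion x y : mulC x y = tlift (fun a b => ra a (eps (mulC b y))) (Delta x).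
Proof.
rewrite -{1}(coring_counitr Ccor (mulC x y)) Delta_mulCr tlift_tract //.
exact: coring_counitr_balanced Ccor.
Qed.

Lemma mulCA : associative mulC.
Proof.
move=> c c' c''; rewrite [RHS](mulC_eps_expansion (mulC c c') c'') Delta_mulCl tlift_tlact.
  rewrite (eq_tlift (g := fun a b => mulC c (ra a (eps (mulC b c''))))); last first.
    by move=> a b; rewrite mulC_rA.
  by rewrite -(tlift_comp (mulC_additive_r c)) -mulC_eps_expansion.
apply: mk_balanced => [a x y|b x y|a r b].
- by rewrite mulC_additive_l epsD (rmod_actDr (coring_rmod Ccor)).
- by rewrite (rmod_actDl (coring_rmod Ccor)).
by rewrite mulC_lA (coring_epsl Ccor) (rmod_actA (coring_rmod Ccor)).
Qed.

Lemma mulC_ring : is_ring mulC e.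
Proof.
split=> [|c|c|x y z|x y z]; first exact: mulCA.
- exact: (frobsys_pi_e_c Cfs c).
- exact: (frobsys_pi_c_e Cfs c).
- exact: (mulC_additive_l z x y).
- exact: (mulC_additive_r x y z).
Qed.

Lemma Theta_rhom : is_rhom ( *%R) 1 mulC e Theta.
Proof.
split=> [a b|a b|]; first by rewrite /Theta (lmod_actDl Clmod).
  by rewrite mulC_Thetal /Theta (lmod_actA Clmod).
exact: (lmod_act1 Clmod e).
Qed.

Lemma level0_ok : level_ok level0.
Proof.
split=> //=.
- exact: pzRing_is_ring.
- exact: mulC_ring.
- exact: Theta_rhom.
- by move=> s a; rewrite mulC_Thetar.
- exact: tcast_coring raE laE Ccor.
- by move=> s s'; rewrite /Delta_Theta Delta_mulCl (tcast_tlact raE laE).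
- by move=> s s'; rewrite /Delta_Theta Delta_mulCr (tcast_tract raE laE).
- by move=> a c; rewrite mulC_Thetal.
- by move=> c a; rewrite mulC_Thetar.
- by move=> x y; rewrite tmkDr.
- move=> s; rewrite tlift_tmk ?mulC_Thetal ?(lmod_act1 Clmod) //.
  apply: mk_balanced => [r x y|c x y|r a c]; first exact: mulC_additive_r.
    by rewrite /Theta (lmod_actDl Clmod) mulC_additive_l.
  by rewrite !mulC_Thetal (lmod_actA Clmod).
- by move=> r c; rewrite mulC_Thetal -tmk_mid /= mul1r.
Qed.

Lemma tower_ok k : level_ok (tower k).
Proof. by elim: k => [|k IH]; [exact: level0_ok | exact: level_spec_next IH]. Qed.

Lemma tower_phi1 c : lv_phi (tower 1) c = Delta c.
Proof.
rewrite -[RHS](tcastK raE laE); apply: eq_tlift => x y.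
exact: tmkR_j level0_ok x y.
Qed.

Lemma tower_phi2 x :
  lv_phi (tower 2) x = tlift (fun c c' => tmk (ra := tract ra) (la := la) (tmk c e) c') x.
Proof.
have phi2b : balanced ra la
    (fun c c' => tmk (ra := tract ra) (la := la) (tmk (ra:=ra) (la:=la) c e) c').
  apply: mk_balanced => [c u v|c' u v|c a c']; first exact: tmkDr.
    by rewrite !tmkDl.
  rewrite tmk_mid (frobsys_e_central Cfs) -(tract_tmk (raD a) (fun r n => actC r n a)).
  by rewrite tmk_mid.
move: x; apply: eq_additive_tensor => [||c c'].
- exact: rhom_additive (level_rhom (tower_ok 2)).
- exact: tlift_additive phi2b.
rewrite (tlift_tmk phi2b).
transitivity (tmk (ra:=tract ra) (la:=la) (tmkR mulC Theta ra (lv_dec level0) c e) c').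
  exact: (phiT_next_tmk level0_ok).
by rewrite (tmkR_j level0_ok).
Qed.

End Tower.

Theorem theorem3p2 (A : pzRingType) (C : zmodType) (la : A -> C -> C) (ra : C -> A -> C)
  (Delta : C -> tensor ra la) (eps : C -> A) :
  is_coring ( *%R) 1 Delta eps ->
  frobenius_coring ( *%R) 1 Delta eps ->
  forall (pi : tensor ra la -> C) (e : C), frobenius_system Delta pi e ->
  exists (mul : forall k, Cpow la ra k -> Cpow la ra k -> Cpow la ra k)
         (one : forall k, Cpow la ra k)
         (phi : forall k, Cpow la ra k -> Cpow la ra k.+1),
  [/\ mul 0%N = ( *%R : A -> A -> A) /\ one 0%N = (1 : A),
      forall k, is_ring (mul k) (one k),
      forall k, is_rhom (mul k) (one k) (mul k.+1) (one k.+1) (phi k),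
      [/\ forall a : A, phi 0%N a = la a e,
          forall c : C, phi 1%N c = Delta c
        & forall x : tensor ra la,
            phi 2%N x = tlift (fun c c' => tmk (ra := tract ra) (la := la) (tmk c e) c') x]
    & forall k,
        frobenius_extension (mul k) (one k) (mul k.+1) (one k.+1) (phi k) /\
        exists (Dk : Cpow la ra k.+1 ->
                     tensor (fun s r => mul k.+1 s (phi k r)) (fun r s => mul k.+1 (phi k r) s))
               (ek : Cpow la ra k.+1 -> Cpow la ra k),
          is_coring (mul k) (one k) Dk ek /\ frobenius_coring (mul k) (one k) Dk ek].
Proof.
move=> Ccor _ pi e Cfs.
pose L := tower Delta eps pi e; have L_ok := tower_ok Ccor Cfs.
exists (fun k => lv_mulR (L k)), (fun k => lv_oneR (L k)), (fun k => lv_phi (L k)).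
split=> // [k|k||k].
- exact: level_ringR (L_ok k).
- exact: level_rhom (L_ok k).
- split=> //; [exact: tower_phi1 Ccor Cfs | exact: tower_phi2 Ccor Cfs].
have [L_ext L_cor] := level_spec_frobenius (L_ok k).
by split=> //; exists (lv_Delta (L k)), (lv_eps (L k)); split=> //; exact: level_coring (L_ok k).
Qed.
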